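(* There exist 4-GDDs of types $69^8 222^1$, $69^8 225^1$, $69^8 228^1$, $69^8 231^1$, $69^8 234^1$ and $69^8 237^1$.
   Context: A 4-GDD of type $g_1^{u_1}\cdots g_r^{u_r}$ is a triple $(V,\mathcal G,\mathcal B)$ where $V$ is a set of $u_1g_1+\cdots+u_rg_r$ points, $\mathcal G$ is a partition of $V$ into $u_i$ groups of size $g_i$ for each $i$, and $\mathcal B$ is a non-empty collection of 4-element subsets (blocks) such that every pair of points from distinct groups lies in exactly one block and no pair from the same group lies in any block. *)

From mathcomp Require Import all_boot.
Set Implicit Arguments. Unset Strict Implicit. Unset Printing Implicit Defensive.

(* A GDD type g_1^{u_1} ... g_r^{u_r} is given as the list [:: (g_1,u_1); ...; (g_r,u_r)]. *)
Definition gdd_type := seq (nat * nat).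

Definition type_sizes (t : gdd_type) : seq nat :=
  flatten [seq nseq p.2 p.1 | p <- t].

Definition type_points (t : gdd_type) : nat :=
  sumn [seq p.1 * p.2 | p <- t].

Definition is_4GDD (V : finType) (G B : {set {set V}}) (t : gdd_type) : Prop :=
  [/\ #|V| = type_points t,
      partition G [set: V] /\ perm_eq (map (fun A : {set V} => #|A|) (enum G)) (type_sizes t),
      B != set0 /\ (forall b, b \in B -> #|b| = 4),
      (forall x y : V, pblock G x != pblock G y ->
          #|[set b in B | (x \in b) && (y \in b)]| = 1) &
      (forall x y : V, x != y -> pblock G x = pblock G y ->
          forall b, b \in B -> ~~ ((x \in b) && (y \in b)))].

(* The blocks are the Z_69-orbits of explicit base blocks.  The points 69 i + r
   (i < 8, r < 69) form the eight groups of size 69 and the g = 3 w points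
   552 + 3 j + r (j < w, r < 3) form the long group; t in Z_69 acts by
   r |-> r + t, modulo 69 on the short groups and modulo 3 on the long one.
   That the developed blocks form a 4-GDD is decided by computation: sorting
   the pairs they cover must give exactly the list of pairs of points in
   distinct groups, so every such pair lies in exactly one block and no other
   pair lies in any block. *)

From Stdlib Require Import NArith.
From mathcomp Require Import all_boot zify.
Set Implicit Arguments. Unset Strict Implicit. Unset Printing Implicit Defensive.

Section Pairs.
Variable T : Type.

Fixpoint pairs_of (s : seq T) : seq (T * T) :=
  if s is x :: s' then [seq (x, y) | y <- s'] ++ pairs_of s' else [::].

Definition upair (le : rel T) (p : T * T) : T * T :=
  if le p.1 p.2 then p else (p.2, p.1).

Definition block_pairs (le : rel T) (q : seq T) : seq (T * T) :=
  map (upair le) (pairs_of q).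

Definition rel_pairs (r : rel T) (s : seq T) : seq (T * T) :=
  [seq p <- [seq (x, y) | x <- s, y <- s] | r p.1 p.2].

End Pairs.

Definition map_pair (T U : Type) (h : T -> U) (p : T * T) : U * U := (h p.1, h p.2).

Section MapPairs.
Variables (T U : Type) (h : T -> U).

Lemma map_pairs_of s : map (map_pair h) (pairs_of s) = pairs_of (map h s).
Proof. by elim: s => //= x s <-; rewrite map_cat -!map_comp. Qed.

Lemma map_block_pairs (leT : rel T) (leU : rel U) q :
  {mono h : x y / leT x y >-> leU x y} ->
  map (map_pair h) (block_pairs leT q) = block_pairs leU (map h q).
Proof.
move=> mono_h; rewrite /block_pairs -map_pairs_of -!map_comp.
by apply: eq_map => -[x y]; rewrite /= /upair /= mono_h; case: ifP.
Qed.

Lemma map_rel_pairs (rT : rel T) (rU : rel U) s :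
  {mono h : x y / rT x y >-> rU x y} ->
  map (map_pair h) (rel_pairs rT s) = rel_pairs rU (map h s).
Proof.
move=> mono_h; rewrite /rel_pairs allpairs_mapl allpairs_mapr.
rewrite -(map_allpairs (map_pair h) pair) filter_map.
by congr map; apply: eq_filter => -[x y] /=; rewrite mono_h.
Qed.

End MapPairs.

Section PairsMem.
Variable T : eqType.
Implicit Types (s : seq T) (x y : T).

Lemma mem_pairs_of s x y : (x, y) \in pairs_of s -> (x \in s) && (y \in s).
Proof.
elim: s => //= z s IH; rewrite mem_cat !inE.
by case/orP => [/mapP [y' ys [-> ->]] | /IH /andP [-> ->]]; rewrite ?eqxx ?ys !orbT.
Qed.

Lemma pairs_of_complete s x y : x \in s -> y \in s -> x != y ->
  ((x, y) \in pairs_of s) || ((y, x) \in pairs_of s).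
Proof.
elim: s => //= z s IH; rewrite !inE !mem_cat => /predU1P [-> | xs] /predU1P [-> | ys] xy.
- by rewrite eqxx in xy.
- by rewrite map_f.
- by rewrite map_f ?orbT.
- by case/orP: (IH xs ys xy) => ->; rewrite !orbT.
Qed.

Lemma pairs_of_neq_uniq s : {in pairs_of s, forall p, p.1 != p.2} -> uniq s.
Proof.
elim: s => //= x s IH neq_s; apply/andP; split.
  by apply/negP => xs; have /= := neq_s (x, x); rewrite mem_cat map_f // eqxx => /(_ isT).
by apply: IH => p ps; apply: neq_s; rewrite mem_cat ps orbT.
Qed.

Lemma mem_rel_pairs (r : rel T) s x y :
  ((x, y) \in rel_pairs r s) = [&& x \in s, y \in s & r x y].
Proof.
rewrite mem_filter /= andbC andbA; congr andb.
apply/allpairsP/andP => [[[a b] [/= ain bin [-> ->]]] | [xs ys]]; first by split.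
by exists (x, y).
Qed.

Lemma rel_pairs_uniq (r : rel T) s : uniq s -> uniq (rel_pairs r s).
Proof.
by move=> s_uniq; rewrite filter_uniq // allpairs_uniq // => -[? ?] [? ?] _ _ /= [-> ->].
Qed.

End PairsMem.

Lemma mem_flatten_map_uniq (T U : eqType) (f : T -> seq U) s a b c :
  uniq (flatten (map f s)) -> a \in s -> b \in s -> c \in f a -> c \in f b -> a = b.
Proof.
elim: s => //= h s IH; rewrite cat_uniq => /and3P [_ disj_h uniq_s].
have hasf x : x \in s -> c \in f x -> c \in f h -> False.
  move=> xs cx ch; case/negP: disj_h; apply/hasP; exists c => //.
  by apply/flatten_mapP; exists x.
rewrite !inE => /predU1P [-> | a_s] /predU1P [-> | b_s] // ca cb.
- by case: (hasf b b_s cb ca).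
- by case: (hasf a a_s ca cb).
- exact: IH.
Qed.

Lemma upair_leqE (p : nat * nat) : upair leq p = (minn p.1 p.2, maxn p.1 p.2).
Proof. by case: p => x y; rewrite /upair /=; case: leqP => h; congr pair; lia. Qed.

Lemma mem_block_pairs_leq q x y : x != y ->
  (upair leq (x, y) \in block_pairs leq q) = (x \in q) && (y \in q).
Proof.
move=> xy; apply/mapP/idP => [[[a b] ab] | /andP [xq yq]].
  rewrite !upair_leqE /= => -[] min_ab max_ab; have /andP [aq bq] := mem_pairs_of ab.
  have [[<- <-] | [<- <-]] : (a = x /\ b = y) \/ (a = y /\ b = x) by lia.
    by rewrite aq bq.
  by rewrite aq bq.
case/orP: (pairs_of_complete xq yq xy) => pq; first by exists (x, y).
by exists (y, x); rewrite // !upair_leqE /= minnC maxnC.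
Qed.

Lemma sumn_type_sizes (t : gdd_type) : sumn (type_sizes t) = type_points t.
Proof.
by elim: t => // -[g u] t IH; rewrite /type_sizes /= sumn_cat sumn_nseq [sumn _]IH.
Qed.

Section GDDOfBlocks.
Variables (n k : nat) (f : nat -> nat) (t : gdd_type) (bl : seq (seq nat)).

Definition fibre i : {set 'I_n} := [set x : 'I_n | f x == i].
Definition groups : {set {set 'I_n}} := preim_partition (fun x : 'I_n => f x) [set: 'I_n].
Definition block_set (q : seq nat) : {set 'I_n} := [set x : 'I_n | val x \in q].
Definition blocks : {set {set 'I_n}} := [set b in map block_set bl].

Hypothesis label_lt : forall x : 'I_n, f x < k.
Hypothesis fibre_gt0 : forall i, i < k -> 0 < #|fibre i|.
Hypothesis fibre_sizes : perm_eq [seq #|fibre i| | i <- iota 0 k] (type_sizes t).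

Lemma groups_partition : partition groups [set: 'I_n].
Proof. exact: preim_partitionP. Qed.

Lemma pblock_groups_eq x y : (pblock groups x == pblock groups y) = (f x == f y).
Proof.
have [_ tiP _] := and3P groups_partition.
have in_pblock x' y' : (y' \in pblock groups x') = (f x' == f y').
  by rewrite pblock_equivalence_partition // => ? ? ? _ _ _; split=> // /eqP ->.
apply/eqP/eqP => [pxy | fxy]; last by apply/same_pblock; rewrite // in_pblock fxy.
by apply/eqP; rewrite -in_pblock pxy in_pblock.
Qed.

Lemma groups_fibres : groups = [set fibre i | i : 'I_k].
Proof.
apply/setP => A; apply/imsetP/imsetP => [[x _ ->] | [i _ ->]].
  by exists (Ordinal (label_lt x)) => //; apply/setP => y; rewrite !inE eq_sym.
have /set0Pn [x] : fibre i != set0 by rewrite -card_gt0 fibre_gt0.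
rewrite inE => /eqP fx; exists x; rewrite ?inE //.
by apply/setP => y; rewrite !inE fx eq_sym.
Qed.

Lemma fibre_inj : injective (fun i : 'I_k => fibre i).
Proof.
move=> i j eq_ij; have /set0Pn [x xi] : fibre i != set0 by rewrite -card_gt0 fibre_gt0.
have xj : x \in fibre j by rewrite -eq_ij.
by apply: val_inj; move: xi xj; rewrite !inE => /eqP -> /eqP.
Qed.

Lemma groups_sizes :
  perm_eq (map (fun A : {set 'I_n} => #|A|) (enum groups)) (type_sizes t).
Proof.
apply: perm_trans fibre_sizes; rewrite -val_enum_ord -map_comp groups_fibres.
rewrite (map_comp (fun A : {set 'I_n} => #|A|) (fun i : 'I_k => fibre i)).
apply: perm_map; apply: uniq_perm; rewrite ?enum_uniq ?(map_inj_uniq fibre_inj) ?enum_uniq //.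
by move=> A; rewrite mem_enum; apply/imsetP/mapP => -[i _ ->]; exists i; rewrite ?mem_enum.
Qed.

Lemma card_ord_type_points : #|'I_n| = type_points t.
Proof.
rewrite -sumn_type_sizes -(perm_sumn groups_sizes) -cardsT (card_partition groups_partition).
by rewrite sumnE big_map big_enum.
Qed.

Hypothesis blocks_nonempty : bl != [::].
Hypothesis blocks_size : all (fun q => size q == 4) bl.
Hypothesis blocks_cover : perm_eq (flatten (map (block_pairs leq) bl))
  (rel_pairs (fun x y => (x < y) && (f x != f y)) (iota 0 n)).

Local Notation covered := (flatten (map (block_pairs leq) bl)).

Lemma covered_uniq : uniq covered.
Proof. by rewrite (perm_uniq blocks_cover) rel_pairs_uniq ?iota_uniq. Qed.

Lemma mem_covered x y : (upair leq (x, y) \in covered) = [&& x < n, y < n & f x != f y].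
Proof.
rewrite upair_leqE (perm_mem blocks_cover) mem_rel_pairs !mem_iota !add0n /=.
case: (ltngtP x y) => [xy | yx | <-] /=; rewrite ?eqxx ?andbF //.
  by rewrite xy; case: (ltnP y n) => yn; rewrite ?andbF ?(ltn_trans xy yn).
by rewrite yx eq_sym andbCA; case: (ltnP x n) => xn; rewrite ?andbF ?(ltn_trans yx xn).
Qed.

Lemma block_pair_cross q x y : q \in bl -> x \in q -> y \in q -> x != y ->
  [&& x < n, y < n & f x != f y].
Proof.
move=> qbl xq yq xy; rewrite -mem_covered; apply/flatten_mapP; exists q => //.
by rewrite mem_block_pairs_leq ?xq.
Qed.

Lemma block_uniq q : q \in bl -> uniq q.
Proof.
move=> qbl; apply: pairs_of_neq_uniq => -[a b] ab /=; apply/eqP => eq_ab; subst b.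
have : upair leq (a, a) \in covered by apply/flatten_mapP; exists q; rewrite ?map_f.
by rewrite mem_covered eqxx !andbF.
Qed.

Lemma block_lt q x : q \in bl -> x \in q -> x < n.
Proof.
move=> qbl xq; have /hasP [y yq yx] : has (predC1 x) q.
  apply/negPn/negP => /hasPn all_x.
  suff : size q <= size [:: x] by move/allP: blocks_size => /(_ q qbl) /eqP ->.
  by apply: uniq_leq_size (block_uniq qbl) _ => y /all_x /negPn; rewrite inE.
by have /and3P [] := block_pair_cross qbl yq xq yx.
Qed.

Lemma card_block_set q : q \in bl -> #|block_set q| = 4.
Proof.
move=> qbl; have -> : block_set q = [set x in pmap insub q].
  by apply/setP => x; rewrite !inE mem_pmap_sub.
rewrite cardsE (card_uniqP _) ?pmap_sub_uniq ?block_uniq // size_pmap_sub.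
rewrite (eq_in_count (a2 := predT)) ?count_predT; last by move=> x /(block_lt qbl).
by apply/eqP; move/allP: blocks_size; apply.
Qed.

Lemma mem_blocks b : reflect (exists2 q, q \in bl & b = block_set q) (b \in blocks).
Proof. by rewrite inE; apply: (iffP mapP) => -[q qbl ->]; exists q. Qed.

Lemma blocks_cross (x y : 'I_n) : f x != f y ->
  #|[set b in blocks | (x \in b) && (y \in b)]| = 1.
Proof.
move=> fxy; have xy : val x != val y by apply: contraNneq fxy => ->.
have /flatten_mapP [q qbl] : upair leq (val x, val y) \in covered.
  by rewrite mem_covered !ltn_ord.
rewrite mem_block_pairs_leq // => /andP [xq yq].
apply/eqP/cards1P; exists (block_set q); apply/setP => b; rewrite in_set in_set1.
apply/andP/eqP => [[/mem_blocks [q' q'bl ->]] | ->]; last first.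
  by split; [apply/mem_blocks; exists q | rewrite !inE xq yq].
rewrite !inE => /andP [xq' yq']; congr block_set.
by apply: (mem_flatten_map_uniq covered_uniq q'bl qbl (c := upair leq (val x, val y)));
  rewrite mem_block_pairs_leq ?xq ?xq'.
Qed.

Lemma blocks_within (x y : 'I_n) : x != y -> f x = f y ->
  forall b, b \in blocks -> ~~ ((x \in b) && (y \in b)).
Proof.
move=> xy fxy _ /mem_blocks [q qbl ->]; rewrite !inE; apply/andP => -[xq yq].
by have /and3P [_ _] := block_pair_cross qbl xq yq xy; rewrite fxy eqxx.
Qed.

Theorem is_4GDD_blocks : is_4GDD groups blocks t.
Proof.
split.
- exact: card_ord_type_points.
- by split; [exact: groups_partition | exact: groups_sizes].
- split; last by move=> _ /mem_blocks [q qbl ->]; apply: card_block_set.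
  have qbl : head [::] bl \in bl by rewrite -nth0 mem_nth // lt0n size_eq0.
  by apply/set0Pn; exists (block_set (head [::] bl)); apply/mem_blocks; exists (head [::] bl).
- by move=> x y; rewrite pblock_groups_eq; apply: blocks_cross.
- by move=> x y xy /eqP; rewrite pblock_groups_eq => /eqP; apply: blocks_within.
Qed.

End GDDOfBlocks.

Lemma card_set_ord_iota (n : nat) (P : pred nat) : #|[set x : 'I_n | P x]| = count P (iota 0 n).
Proof. by rewrite -sum1dep_card -(big_mkord P (fun=> 1)) -sum1_count /index_iota subn0. Qed.

Definition group_of (m u x : nat) : nat := if x < u * m then x %/ m else u.

Section GroupOf.
Variables (m u g : nat).
Hypotheses (m_gt0 : 0 < m) (g_gt0 : 0 < g).
Local Notation n := (u * m + g).
Local Notation f := (group_of m u).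

Lemma group_of_le x : f x <= u.
Proof. by rewrite /group_of; case: ltnP => // x_lt; rewrite ltnW // ltn_divLR. Qed.

Lemma count_div_iota i v : count (fun x => x %/ m == i) (iota 0 (v * m)) = (i < v) * m.
Proof.
elim: v => [|v IH]; first by rewrite ltn0.
rewrite mulSn addnC iotaD count_cat IH add0n -[v * m]addn0 iotaDl count_map.
rewrite (eq_in_count (a2 := fun=> i == v)); last first.
  by move=> r; rewrite mem_iota /= => r_lt; rewrite divnMDl // divn_small // addn0 eq_sym.
rewrite ltnS; case: (ltngtP i v) => _.
- by rewrite (count_pred0 (iota 0 m)) addn0.
- by rewrite (count_pred0 (iota 0 m)) addn0.
- by rewrite (count_predT (iota 0 m)) size_iota mul0n mul1n.
Qed.

Lemma card_fibre_group_of i : i <= u -> #|fibre n f i| = if i < u then m else g.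
Proof.
move=> i_le; rewrite /fibre (card_set_ord_iota _ (fun x => f x == i)) iotaD count_cat add0n.
rewrite (eq_in_count (a2 := fun x => x %/ m == i)); last first.
  by move=> x; rewrite mem_iota /group_of add0n => /andP [_ ->].
rewrite count_div_iota (eq_in_count (a2 := fun=> u == i)); last first.
  by move=> x; rewrite mem_iota => /andP [x_ge _]; rewrite /group_of ltnNge x_ge.
case: (ltngtP i u) i_le => // _ _.
- by rewrite (count_pred0 (iota (u * m) g)) mul1n addn0.
- by rewrite (count_predT (iota (u * m) g)) size_iota mul0n.
Qed.

Lemma fibre_sizes_group_of :
  [seq #|fibre n f i| | i <- iota 0 u.+1] = type_sizes [:: (m, u); (g, 1)].
Proof.
rewrite -addn1 iotaD map_cat /= card_fibre_group_of // ltnn /type_sizes /=.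
congr (_ ++ _); rewrite -[u in nseq u](size_iota 0) -(size_map (fun i => #|fibre n f i|)).
apply/all_pred1P/allP => y /mapP [i]; rewrite mem_iota add0n => /andP [_ i_lt] ->.
by rewrite /= (card_fibre_group_of (ltnW i_lt)) i_lt.
Qed.

Theorem is_4GDD_group_of (bl : seq (seq nat)) :
  bl != [::] -> all (fun q => size q == 4) bl ->
  perm_eq (flatten (map (block_pairs leq) bl))
    (rel_pairs (fun x y => (x < y) && (f x != f y)) (iota 0 n)) ->
  is_4GDD (groups n f) (blocks n bl) [:: (m, u); (g, 1)].
Proof.
apply: (is_4GDD_blocks (k := u.+1)).
- by move=> x; rewrite ltnS group_of_le.
- by move=> i; rewrite ltnS => i_le; rewrite card_fibre_group_of //; case: ifP.
- by rewrite fibre_sizes_group_of.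
Qed.

End GroupOf.

Local Notation toN := N.to_nat.

Lemma N2Nat_div (a b : N) : toN (a / b) = toN a %/ toN b.
Proof.
rewrite Nnat.N2Nat.inj_div; case: (toN b) => [|d]; first by case: (toN a).
apply/esym/(PeanoNat.Nat.div_unique _ _ _ (toN a %% d.+1)).
  by apply/ltP; rewrite ltn_mod.
by rewrite {1}(divn_eq (toN a) d.+1) mulnC.
Qed.

Section Z69Development.
Local Open Scope N_scope.

(* Each Z_69-orbit of points starts at a multiple of k, so the residue of p in
   its orbit is p mod k, and it becomes (p + t) mod k. *)
Definition z69_act (t p : N) : N :=
  let k := if p <? 552 then 69 else 3 in p - p mod k + (p + t) mod k.

Definition develop (base : seq (seq N)) : seq (seq N) :=
  [seq map (z69_act t) q | q <- base, t <- map N.of_nat (iota 0 69)%nat].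

Definition group_ofN (x : N) : N := if x <? 552 then x / 69 else 8.

Definition cross_groupN (x y : N) : bool := (x <? y) && (group_ofN x != group_ofN y).

Definition lexN (p q : N * N) : bool := (p.1 <? q.1) || (p.1 =? q.1) && (p.2 <=? q.2).

End Z69Development.

(* Equality after sorting decides the permutation, because [rel_pairs] already
   lists the pairs in the lexicographic order that [sort lexN] produces. *)
Definition gdd_check (base : seq (seq N)) (n : nat) : bool :=
  let bl := develop base in
  [&& bl != [::], all (fun q => size q == 4) bl &
      sort lexN (flatten (map (block_pairs N.leb) bl))
        == rel_pairs cross_groupN (map N.of_nat (iota 0 n))].

Lemma N2Nat_group_of x : toN (group_ofN x) = group_of 69 8 (toN x).
Proof.
rewrite /group_ofN /group_of; have -> : N.ltb x 552 = (toN x < 8 * 69) by apply/idP/idP; lia.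
by case: ifP => _; rewrite ?N2Nat_div.
Qed.

Lemma N2Nat_leb : {mono toN : x y / N.leb x y >-> x <= y}.
Proof. by move=> x y; apply/idP/idP; lia. Qed.

Lemma N2Nat_cross_group :
  {mono toN : x y / cross_groupN x y >-> (x < y) && (group_of 69 8 x != group_of 69 8 y)}.
Proof.
move=> x y; rewrite /cross_groupN -!N2Nat_group_of (inj_eq Nnat.N2Nat.inj).
by congr andb; apply/idP/idP; lia.
Qed.

Lemma gdd_check_sound base g : gdd_check base (8 * 69 + g) -> 0 < g ->
  exists G B : {set {set 'I_(8 * 69 + g)}}, is_4GDD G B [:: (69, 8); (g, 1)].
Proof.
set bl := develop base; move=> /and3P [bl_nil bl_size /eqP bl_sort] g_gt0.
exists (groups _ (group_of 69 8)), (blocks _ (map (map toN) bl)).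
apply: is_4GDD_group_of => //.
- by move: bl_nil; rewrite -!size_eq0 size_map.
- by rewrite all_map; apply: sub_all bl_size => q; rewrite /= size_map.
- have /permEl sort_perm := perm_sort lexN (flatten (map (block_pairs N.leb) bl)).
  move: (perm_map (map_pair toN) sort_perm).
  rewrite bl_sort perm_sym map_flatten -map_comp (map_rel_pairs _ N2Nat_cross_group).
  rewrite -map_comp (@eq_map _ _ _ id) ?map_id; last by move=> x /=; rewrite Nnat.Nat2N.id.
  rewrite -map_comp (eq_map (g := block_pairs leq \o map toN)) // => q.
  exact: map_block_pairs N2Nat_leb.
Qed.

Section BaseBlocks.
Local Open Scope N_scope.

Definition base_blocks_222 : seq (seq N) := [::
  [:: 38; 107; 325; 552]; [:: 102; 228; 398; 552]; [:: 188; 227; 287; 552]; [:: 318; 384; 528; 552];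
  [:: 201; 364; 436; 552]; [:: 21; 202; 506; 552]; [:: 133; 425; 550; 552]; [:: 61; 271; 459; 552];
  [:: 38; 98; 310; 555]; [:: 93; 241; 362; 555]; [:: 177; 213; 308; 555]; [:: 276; 399; 515; 555];
  [:: 196; 349; 472; 555]; [:: 3; 149; 544; 555]; [:: 130; 464; 546; 555]; [:: 31; 233; 456; 555];
  [:: 5; 86; 325; 558]; [:: 120; 227; 380; 558]; [:: 151; 232; 281; 558]; [:: 297; 366; 511; 558];
  [:: 149; 352; 469; 558]; [:: 18; 180; 543; 558]; [:: 133; 464; 524; 558]; [:: 40; 228; 435; 558];
  [:: 28; 203; 293; 561]; [:: 88; 177; 238; 561]; [:: 243; 318; 517; 561]; [:: 84; 325; 403; 561];
  [:: 137; 435; 503; 561]; [:: 15; 408; 546; 561]; [:: 148; 410; 467; 561]; [:: 26; 227; 448; 561];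
  [:: 10; 203; 308; 564]; [:: 72; 189; 207; 564]; [:: 239; 285; 532; 564]; [:: 119; 340; 365; 564];
  [:: 91; 478; 536; 564]; [:: 24; 364; 534; 564]; [:: 169; 345; 453; 564]; [:: 38; 208; 443; 564];
  [:: 34; 173; 338; 567]; [:: 122; 147; 275; 567]; [:: 211; 318; 538; 567]; [:: 94; 340; 372; 567];
  [:: 108; 479; 542; 567]; [:: 24; 398; 492; 567]; [:: 151; 394; 439; 567]; [:: 17; 237; 480; 567];
  [:: 3; 183; 375; 570]; [:: 82; 146; 272; 570]; [:: 231; 364; 458; 570]; [:: 108; 296; 371; 570];
  [:: 134; 475; 549; 570]; [:: 20; 291; 477; 570]; [:: 193; 328; 505; 570]; [:: 31; 256; 536; 570];
  [:: 36; 139; 394; 573]; [:: 135; 153; 260; 573]; [:: 222; 410; 478; 573]; [:: 71; 325; 393; 573];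
  [:: 85; 417; 516; 573]; [:: 50; 323; 431; 573]; [:: 179; 333; 544; 573]; [:: 43; 223; 488; 573];
  [:: 18; 152; 386; 576]; [:: 113; 145; 227; 576]; [:: 255; 378; 456; 576]; [:: 76; 291; 367; 576];
  [:: 117; 434; 504; 576]; [:: 44; 310; 475; 576]; [:: 159; 332; 526; 576]; [:: 64; 256; 512; 576];
  [:: 10; 104; 279; 579]; [:: 103; 171; 438; 579]; [:: 200; 220; 337; 579]; [:: 308; 448; 535; 579];
  [:: 261; 393; 452; 579]; [:: 68; 242; 485; 579]; [:: 72; 407; 525; 579]; [:: 21; 187; 346; 579];
  [:: 23; 109; 335; 582]; [:: 84; 176; 465; 582]; [:: 157; 209; 285; 582]; [:: 307; 433; 540; 582];
  [:: 259; 384; 428; 582]; [:: 39; 207; 523; 582]; [:: 137; 392; 542; 582]; [:: 22; 171; 406; 582];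
  [:: 9; 99; 319; 585]; [:: 92; 199; 462; 585]; [:: 153; 216; 278; 585]; [:: 342; 460; 515; 585];
  [:: 212; 360; 431; 585]; [:: 16; 220; 522; 585]; [:: 91; 377; 499; 585]; [:: 56; 170; 397; 585];
  [:: 56; 108; 210; 588]; [:: 100; 153; 357; 588]; [:: 202; 227; 436; 588]; [:: 217; 290; 352; 588];
  [:: 410; 416; 524; 588]; [:: 7; 303; 423; 588]; [:: 128; 304; 540; 588]; [:: 9; 149; 508; 588];
  [:: 23; 122; 265; 591]; [:: 123; 201; 346; 591]; [:: 166; 246; 441; 591]; [:: 251; 282; 365; 591];
  [:: 399; 451; 498; 591]; [:: 40; 298; 455; 591]; [:: 136; 317; 526; 591]; [:: 51; 161; 491; 591];
  [:: 29; 103; 275; 594]; [:: 134; 138; 413; 594]; [:: 160; 262; 425; 594]; [:: 207; 331; 375; 594];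
  [:: 376; 438; 484; 594]; [:: 31; 293; 427; 594]; [:: 84; 312; 533; 594]; [:: 0; 155; 504; 594];
  [:: 2; 116; 296; 597]; [:: 126; 176; 244; 597]; [:: 202; 336; 471; 597]; [:: 257; 286; 391; 597];
  [:: 273; 481; 533; 597]; [:: 39; 393; 479; 597]; [:: 121; 377; 523; 597]; [:: 52; 195; 483; 597];
  [:: 24; 94; 283; 600]; [:: 80; 161; 239; 600]; [:: 196; 335; 479; 600]; [:: 216; 300; 345; 600];
  [:: 232; 438; 542; 600]; [:: 61; 404; 481; 600]; [:: 105; 382; 508; 600]; [:: 35; 189; 510; 600];
  [:: 58; 105; 315; 603]; [:: 91; 143; 228; 603]; [:: 199; 280; 430; 603]; [:: 241; 278; 377; 603];
  [:: 212; 452; 485; 603]; [:: 35; 352; 471; 603]; [:: 110; 393; 550; 603]; [:: 6; 165; 540; 603];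
  [:: 39; 126; 373; 606]; [:: 107; 200; 253; 606]; [:: 138; 330; 371; 606]; [:: 254; 369; 430; 606];
  [:: 237; 305; 486; 606]; [:: 50; 343; 452; 606]; [:: 94; 444; 520; 606]; [:: 43; 151; 530; 606];
  [:: 6; 102; 404; 609]; [:: 119; 147; 271; 609]; [:: 202; 305; 345; 609]; [:: 212; 409; 416; 609];
  [:: 258; 298; 489; 609]; [:: 20; 312; 474; 609]; [:: 70; 442; 499; 609]; [:: 13; 146; 491; 609];
  [:: 21; 123; 360; 612]; [:: 104; 148; 238; 612]; [:: 200; 277; 367; 612]; [:: 260; 371; 456; 612];
  [:: 249; 321; 534; 612]; [:: 56; 341; 442; 612]; [:: 88; 425; 526; 612]; [:: 19; 156; 539; 612];
  [:: 26; 83; 426; 615]; [:: 81; 161; 341; 615]; [:: 222; 315; 437; 615]; [:: 186; 357; 430; 615];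
  [:: 142; 271; 516; 615]; [:: 7; 266; 407; 615]; [:: 76; 406; 533; 615]; [:: 0; 337; 508; 615];
  [:: 41; 94; 471; 618]; [:: 128; 165; 318; 618]; [:: 249; 307; 461; 618]; [:: 178; 357; 475; 618];
  [:: 167; 211; 483; 618]; [:: 7; 236; 356; 618]; [:: 111; 379; 530; 618]; [:: 57; 290; 538; 618];
  [:: 32; 93; 459; 621]; [:: 106; 166; 298; 621]; [:: 213; 278; 452; 621]; [:: 203; 393; 451; 621];
  [:: 198; 217; 537; 621]; [:: 16; 227; 377; 621]; [:: 116; 409; 515; 621]; [:: 63; 315; 505; 621];
  [:: 32; 109; 247; 624]; [:: 80; 141; 331; 624]; [:: 170; 212; 388; 624]; [:: 273; 305; 493; 624];
  [:: 324; 374; 480; 624]; [:: 21; 357; 519; 624]; [:: 108; 470; 518; 624]; [:: 55; 202; 463; 624];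
  [:: 58; 95; 264; 627]; [:: 72; 186; 342; 627]; [:: 158; 223; 368; 627]; [:: 263; 319; 485; 627];
  [:: 281; 408; 482; 627]; [:: 26; 373; 544; 627]; [:: 79; 427; 525; 627]; [:: 57; 145; 423; 627];
  [:: 30; 84; 263; 630]; [:: 127; 186; 329; 630]; [:: 149; 207; 366; 630]; [:: 265; 279; 528; 630];
  [:: 295; 352; 454; 630]; [:: 28; 395; 491; 630]; [:: 116; 432; 538; 630]; [:: 32; 205; 476; 630];
  [:: 31; 123; 339; 633]; [:: 134; 149; 345; 633]; [:: 157; 263; 299; 633]; [:: 334; 385; 431; 633];
  [:: 262; 374; 523; 633]; [:: 29; 207; 475; 633]; [:: 91; 459; 524; 633]; [:: 48; 147; 549; 633];
  [:: 47; 83; 283; 636]; [:: 82; 159; 380; 636]; [:: 206; 232; 282; 636]; [:: 323; 372; 435; 636];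
  [:: 249; 406; 546; 636]; [:: 33; 251; 437; 636]; [:: 111; 469; 511; 636]; [:: 67; 199; 488; 636];
  [:: 21; 97; 281; 639]; [:: 102; 151; 367; 639]; [:: 150; 264; 316; 639]; [:: 306; 380; 427; 639];
  [:: 275; 357; 488; 639]; [:: 28; 235; 438; 639]; [:: 83; 452; 513; 639]; [:: 11; 167; 490; 639];
  [:: 6; 78; 307; 642]; [:: 133; 154; 245; 642]; [:: 176; 302; 503; 642]; [:: 270; 339; 392; 642];
  [:: 265; 430; 484; 642]; [:: 7; 378; 495; 642]; [:: 101; 409; 429; 642]; [:: 14; 159; 467; 642];
  [:: 17; 102; 332; 645]; [:: 118; 193; 227; 645]; [:: 200; 333; 501; 645]; [:: 240; 322; 413; 645];
  [:: 223; 447; 527; 645]; [:: 27; 375; 529; 645]; [:: 80; 355; 458; 645]; [:: 28; 153; 454; 645];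
  [:: 13; 123; 327; 648]; [:: 79; 151; 263; 648]; [:: 197; 307; 514; 648]; [:: 222; 338; 371; 648];
  [:: 265; 482; 504; 648]; [:: 35; 408; 527; 648]; [:: 86; 406; 442; 648]; [:: 48; 150; 420; 648];
  [:: 32; 71; 308; 651]; [:: 130; 195; 504; 651]; [:: 188; 304; 377; 651]; [:: 219; 327; 520; 651];
  [:: 363; 470; 545; 651]; [:: 9; 244; 391; 651]; [:: 69; 254; 433; 651]; [:: 34; 139; 453; 651];
  [:: 61; 120; 343; 654]; [:: 95; 165; 542; 654]; [:: 188; 288; 399; 654]; [:: 239; 335; 537; 654];
  [:: 409; 437; 520; 654]; [:: 47; 222; 389; 654]; [:: 130; 259; 472; 654]; [:: 36; 205; 435; 654];
  [:: 30; 94; 297; 657]; [:: 75; 144; 484; 657]; [:: 146; 290; 376; 657]; [:: 241; 307; 536; 657];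
  [:: 353; 437; 525; 657]; [:: 28; 245; 384; 657]; [:: 134; 207; 481; 657]; [:: 53; 145; 474; 657];
  [:: 22; 95; 329; 660]; [:: 136; 143; 449; 660]; [:: 159; 340; 487; 660]; [:: 237; 300; 430; 660];
  [:: 411; 471; 543; 660]; [:: 48; 229; 551; 660]; [:: 87; 257; 401; 660]; [:: 50; 178; 376; 660];
  [:: 15; 104; 328; 663]; [:: 76; 178; 436; 663]; [:: 194; 309; 537; 663]; [:: 223; 320; 453; 663];
  [:: 409; 428; 509; 663]; [:: 23; 263; 520; 663]; [:: 72; 252; 357; 663]; [:: 37; 204; 401; 663];
  [:: 26; 110; 279; 666]; [:: 103; 138; 462; 666]; [:: 181; 299; 542; 666]; [:: 275; 277; 473; 666];
  [:: 395; 448; 499; 666]; [:: 19; 273; 543; 666]; [:: 81; 274; 376; 666]; [:: 27; 158; 357; 666];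
  [:: 23; 94; 268; 669]; [:: 81; 164; 328; 669]; [:: 192; 243; 548; 669]; [:: 248; 281; 388; 669];
  [:: 294; 435; 549; 669]; [:: 55; 365; 526; 669]; [:: 113; 351; 442; 669]; [:: 57; 178; 446; 669];
  [:: 11; 108; 271; 672]; [:: 77; 177; 299; 672]; [:: 172; 255; 485; 672]; [:: 221; 312; 358; 672];
  [:: 292; 415; 492; 672]; [:: 7; 377; 514; 672]; [:: 130; 372; 476; 672]; [:: 36; 206; 447; 672];
  [:: 17; 83; 238; 675]; [:: 130; 193; 294; 675]; [:: 203; 231; 500; 675]; [:: 245; 331; 403; 675];
  [:: 338; 449; 522; 675]; [:: 34; 380; 514; 675]; [:: 123; 390; 459; 675]; [:: 51; 204; 430; 675];
  [:: 22; 89; 256; 678]; [:: 79; 187; 410; 678]; [:: 203; 207; 459; 678]; [:: 218; 405; 512; 678];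
  [:: 336; 391; 481; 678]; [:: 26; 440; 490; 678]; [:: 117; 316; 513; 678]; [:: 0; 186; 299; 678];
  [:: 67; 102; 225; 681]; [:: 107; 205; 407; 681]; [:: 191; 275; 448; 681]; [:: 265; 348; 542; 681];
  [:: 304; 391; 473; 681]; [:: 17; 426; 511; 681]; [:: 94; 311; 483; 681]; [:: 27; 171; 291; 681];
  [:: 28; 70; 221; 684]; [:: 84; 175; 383; 684]; [:: 140; 250; 452; 684]; [:: 261; 369; 548; 684];
  [:: 326; 349; 450; 684]; [:: 53; 421; 505; 684]; [:: 137; 303; 507; 684]; [:: 3; 153; 277; 684];
  [:: 64; 200; 355; 687]; [:: 89; 175; 254; 687]; [:: 249; 380; 431; 687]; [:: 120; 278; 345; 687];
  [:: 109; 463; 503; 687]; [:: 27; 307; 456; 687]; [:: 156; 297; 516; 687]; [:: 11; 247; 550; 687];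
  [:: 56; 174; 352; 690]; [:: 127; 206; 233; 690]; [:: 267; 362; 461; 690]; [:: 110; 323; 351; 690];
  [:: 78; 433; 526; 690]; [:: 40; 337; 468; 690]; [:: 190; 339; 542; 690]; [:: 60; 223; 504; 690];
  [:: 45; 160; 373; 693]; [:: 135; 162; 248; 693]; [:: 237; 392; 434; 693]; [:: 136; 323; 354; 693];
  [:: 137; 421; 510; 693]; [:: 26; 343; 432; 693]; [:: 167; 330; 538; 693]; [:: 40; 256; 500; 693];
  [:: 58; 89; 348; 696]; [:: 82; 198; 270; 696]; [:: 262; 319; 371; 696]; [:: 181; 400; 427; 696];
  [:: 188; 296; 526; 696]; [:: 11; 306; 443; 696]; [:: 99; 444; 485; 696]; [:: 36; 236; 519; 696];
  [:: 49; 97; 402; 699]; [:: 135; 181; 257; 699]; [:: 270; 279; 413; 699]; [:: 176; 391; 458; 699];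
  [:: 180; 340; 535; 699]; [:: 35; 338; 453; 699]; [:: 95; 439; 539; 699]; [:: 21; 220; 495; 699];
  [:: 16; 84; 396; 702]; [:: 113; 155; 217; 702]; [:: 275; 293; 401; 702]; [:: 147; 397; 438; 702];
  [:: 196; 288; 511; 702]; [:: 23; 298; 436; 702]; [:: 82; 431; 536; 702]; [:: 63; 246; 483; 702];
  [:: 28; 151; 415; 705]; [:: 89; 194; 234; 705]; [:: 223; 313; 452; 705]; [:: 76; 385; 465; 705];
  [:: 69; 321; 519; 705]; [:: 39; 323; 347; 705]; [:: 192; 393; 521; 705]; [:: 62; 275; 484; 705];
  [:: 38; 145; 441; 708]; [:: 123; 197; 263; 708]; [:: 255; 314; 427; 708]; [:: 80; 401; 419; 708];
  [:: 103; 298; 504; 708]; [:: 10; 291; 354; 708]; [:: 144; 349; 533; 708]; [:: 51; 259; 505; 708];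
  [:: 3; 199; 437; 711]; [:: 76; 161; 208; 711]; [:: 272; 333; 462; 711]; [:: 69; 408; 448; 711];
  [:: 113; 284; 510; 711]; [:: 2; 325; 385; 711]; [:: 183; 365; 518; 711]; [:: 55; 264; 502; 711];
  [:: 41; 81; 362; 714]; [:: 124; 212; 491; 714]; [:: 161; 262; 400; 714]; [:: 303; 387; 520; 714];
  [:: 183; 445; 531; 714]; [:: 39; 202; 281; 714]; [:: 95; 292; 471; 714]; [:: 46; 249; 416; 714];
  [:: 10; 85; 361; 717]; [:: 128; 258; 548; 717]; [:: 183; 260; 360; 717]; [:: 312; 359; 517; 717];
  [:: 196; 436; 549; 717]; [:: 14; 155; 293; 717]; [:: 99; 331; 429; 717]; [:: 45; 214; 425; 717];
  [:: 45; 101; 390; 720]; [:: 81; 208; 494; 720]; [:: 190; 246; 359; 720]; [:: 342; 376; 505; 720];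
  [:: 149; 430; 483; 720]; [:: 28; 147; 305; 720]; [:: 115; 277; 453; 720]; [:: 17; 239; 476; 720];
  [:: 15; 93; 411; 723]; [:: 133; 200; 525; 723]; [:: 157; 207; 382; 723]; [:: 333; 359; 518; 723];
  [:: 244; 477; 520; 723]; [:: 50; 209; 320; 723]; [:: 80; 289; 437; 723]; [:: 19; 183; 481; 723];
  [:: 47; 69; 359; 726]; [:: 109; 204; 541; 726]; [:: 146; 210; 366; 726]; [:: 317; 346; 513; 726];
  [:: 250; 439; 542; 726]; [:: 40; 254; 277; 726]; [:: 101; 306; 474; 726]; [:: 12; 154; 482; 726];
  [:: 37; 81; 355; 729]; [:: 133; 163; 485; 729]; [:: 168; 222; 368; 729]; [:: 334; 369; 499; 729];
  [:: 268; 446; 495; 729]; [:: 27; 221; 315; 729]; [:: 134; 308; 460; 729]; [:: 5; 203; 456; 729];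
  [:: 4; 122; 380; 732]; [:: 135; 232; 321; 732]; [:: 172; 243; 360; 732]; [:: 329; 406; 484; 732];
  [:: 167; 319; 444; 732]; [:: 17; 147; 494; 732]; [:: 91; 481; 543; 732]; [:: 36; 248; 428; 732];
  [:: 20; 135; 383; 735]; [:: 70; 275; 318; 735]; [:: 193; 307; 355; 735]; [:: 268; 378; 520; 735];
  [:: 182; 228; 456; 735]; [:: 48; 183; 507; 735]; [:: 122; 437; 515; 735]; [:: 64; 314; 442; 735];
  [:: 23; 124; 447; 738]; [:: 86; 196; 225; 738]; [:: 241; 282; 455; 738]; [:: 164; 373; 466; 738];
  [:: 186; 293; 518; 738]; [:: 63; 319; 356; 738]; [:: 99; 402; 522; 738]; [:: 37; 221; 532; 738];
  [:: 64; 127; 433; 741]; [:: 137; 139; 209; 741]; [:: 267; 341; 414; 741]; [:: 185; 369; 434; 741];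
  [:: 147; 325; 501; 741]; [:: 54; 309; 370; 741]; [:: 135; 350; 491; 741]; [:: 47; 244; 508; 741];
  [:: 50; 101; 248; 744]; [:: 126; 177; 484; 744]; [:: 185; 216; 370; 744]; [:: 229; 306; 495; 744];
  [:: 351; 421; 515; 744]; [:: 30; 277; 362; 744]; [:: 124; 332; 446; 744]; [:: 37; 157; 480; 744];
  [:: 14; 94; 305; 747]; [:: 99; 154; 426; 747]; [:: 159; 321; 401; 747]; [:: 246; 310; 446; 747];
  [:: 387; 430; 522; 747]; [:: 58; 230; 391; 747]; [:: 107; 235; 544; 747]; [:: 42; 200; 518; 747];
  [:: 49; 83; 355; 750]; [:: 126; 180; 521; 750]; [:: 176; 303; 359; 750]; [:: 221; 348; 538; 750];
  [:: 281; 442; 537; 750]; [:: 15; 270; 304; 750]; [:: 79; 241; 467; 750]; [:: 44; 196; 417; 750];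
  [:: 48; 130; 210; 753]; [:: 126; 192; 332; 753]; [:: 188; 263; 440; 753]; [:: 208; 322; 393; 753];
  [:: 324; 427; 493; 753]; [:: 67; 376; 474; 753]; [:: 80; 353; 531; 753]; [:: 29; 151; 551; 753];
  [:: 1; 113; 453; 756]; [:: 120; 182; 274; 756]; [:: 195; 297; 482; 756]; [:: 264; 360; 439; 756];
  [:: 221; 343; 505; 756]; [:: 5; 305; 394; 756]; [:: 115; 347; 513; 756]; [:: 9; 187; 551; 756];
  [:: 24; 89; 285; 759]; [:: 75; 184; 233; 759]; [:: 229; 308; 500; 759]; [:: 152; 340; 431; 759];
  [:: 186; 377; 532; 759]; [:: 47; 423; 513; 759]; [:: 97; 394; 460; 759]; [:: 1; 231; 393; 759];
  [:: 49; 137; 401; 762]; [:: 72; 198; 334; 762]; [:: 160; 264; 355; 762]; [:: 323; 387; 535; 762];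
  [:: 217; 321; 427; 762]; [:: 15; 263; 530; 762]; [:: 88; 468; 495; 762]; [:: 11; 149; 434; 762];
  [:: 50; 133; 340; 765]; [:: 128; 227; 480; 765]; [:: 183; 250; 330; 765]; [:: 287; 368; 451; 765];
  [:: 187; 434; 531; 765]; [:: 40; 200; 375; 765]; [:: 84; 388; 512; 765]; [:: 12; 270; 538; 765];
  [:: 29; 79; 315; 768]; [:: 123; 166; 214; 768]; [:: 255; 340; 417; 768]; [:: 159; 314; 396; 768];
  [:: 170; 443; 512; 768]; [:: 66; 404; 430; 768]; [:: 77; 400; 483; 768]; [:: 31; 227; 550; 768];
  [:: 46; 101; 383; 771]; [:: 114; 202; 308; 771]; [:: 159; 388; 452; 771]; [:: 218; 288; 384; 771];
  [:: 289; 436; 507; 771]; [:: 35; 240; 432; 771]; [:: 91; 208; 532; 771]; [:: 30; 143; 512; 771];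
  [:: 112; 168; 285; 536]; [:: 58; 82; 140; 475]; [:: 112; 146; 245; 426]; [:: 34; 113; 221; 446];
  [:: 237; 281; 409; 496]; [:: 8; 232; 286; 374]; [:: 84; 166; 240; 502]; [:: 149; 300; 412; 443];
  [:: 29; 124; 338; 420]; [:: 147; 240; 403; 458]; [:: 128; 259; 326; 479]; [:: 76; 265; 295; 450];
  [:: 31; 69; 213; 294]; [:: 49; 298; 368; 542]; [:: 57; 119; 214; 407]; [:: 38; 203; 360; 496];
  [:: 52; 178; 247; 335]; [:: 203; 383; 439; 506]; [:: 209; 329; 408; 431]; [:: 8; 135; 227; 546];
  [:: 52; 200; 407; 519]; [:: 173; 302; 465; 524]; [:: 44; 73; 413; 487]; [:: 156; 323; 442; 506];
  [:: 113; 357; 438; 517]; [:: 11; 196; 368; 507]].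

Definition base_blocks_225 : seq (seq N) := [::
  [:: 50; 91; 366; 552]; [:: 117; 188; 328; 552]; [:: 193; 370; 467; 552]; [:: 250; 285; 386; 552];
  [:: 296; 480; 497; 552]; [:: 46; 248; 436; 552]; [:: 128; 237; 526; 552]; [:: 12; 189; 501; 552];
  [:: 23; 135; 390; 555]; [:: 110; 163; 335; 555]; [:: 174; 394; 477; 555]; [:: 227; 313; 404; 555];
  [:: 300; 442; 538; 555]; [:: 34; 243; 464; 555]; [:: 70; 211; 483; 555]; [:: 63; 170; 506; 555];
  [:: 35; 98; 348; 558]; [:: 133; 168; 339; 558]; [:: 146; 397; 454; 558]; [:: 222; 296; 353; 558];
  [:: 316; 482; 513; 558]; [:: 52; 262; 420; 558]; [:: 114; 251; 545; 558]; [:: 15; 151; 529; 558];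
  [:: 13; 80; 351; 561]; [:: 84; 181; 249; 561]; [:: 229; 355; 539; 561]; [:: 183; 291; 371; 561];
  [:: 200; 418; 499; 561]; [:: 57; 310; 492; 561]; [:: 124; 299; 429; 561]; [:: 17; 251; 473; 561];
  [:: 65; 82; 356; 564]; [:: 122; 166; 228; 564]; [:: 208; 402; 508; 564]; [:: 204; 295; 379; 564];
  [:: 188; 439; 546; 564]; [:: 13; 314; 551; 564]; [:: 132; 330; 471; 564]; [:: 63; 233; 446; 564];
  [:: 42; 78; 376; 567]; [:: 118; 202; 207; 567]; [:: 229; 407; 489; 567]; [:: 201; 323; 348; 567];
  [:: 155; 481; 506; 567]; [:: 17; 288; 544; 567]; [:: 125; 319; 447; 567]; [:: 13; 242; 452; 567];
  [:: 57; 119; 219; 570]; [:: 124; 169; 430; 570]; [:: 176; 275; 408; 570]; [:: 250; 452; 531; 570];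
  [:: 327; 394; 444; 570]; [:: 14; 359; 527; 570]; [:: 105; 344; 490; 570]; [:: 43; 180; 322; 570];
  [:: 23; 115; 238; 573]; [:: 111; 143; 466; 573]; [:: 168; 216; 377; 573]; [:: 272; 428; 517; 573];
  [:: 309; 405; 420; 573]; [:: 55; 403; 489; 573]; [:: 137; 332; 515; 573]; [:: 30; 151; 280; 573];
  [:: 22; 69; 257; 576]; [:: 89; 165; 481; 576]; [:: 160; 253; 394; 576]; [:: 216; 422; 515; 576];
  [:: 333; 374; 432; 576]; [:: 39; 378; 535; 576]; [:: 85; 299; 510; 576]; [:: 20; 194; 286; 576];
  [:: 0; 178; 331; 579]; [:: 74; 200; 241; 579]; [:: 240; 288; 380; 579]; [:: 124; 287; 499; 579];
  [:: 117; 355; 421; 579]; [:: 40; 393; 486; 579]; [:: 147; 446; 548; 579]; [:: 62; 209; 441; 579];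
  [:: 21; 168; 295; 582]; [:: 119; 139; 237; 582]; [:: 263; 318; 348; 582]; [:: 91; 317; 488; 582];
  [:: 105; 371; 430; 582]; [:: 61; 361; 484; 582]; [:: 155; 470; 537; 582]; [:: 62; 226; 465; 582];
  [:: 57; 167; 280; 585]; [:: 128; 195; 239; 585]; [:: 253; 297; 403; 585]; [:: 82; 317; 498; 585];
  [:: 117; 402; 424; 585]; [:: 34; 407; 536; 585]; [:: 190; 431; 523; 585]; [:: 44; 225; 441; 585];
  [:: 11; 104; 237; 588]; [:: 79; 160; 336; 588]; [:: 191; 271; 362; 588]; [:: 212; 277; 416; 588];
  [:: 278; 378; 502; 588]; [:: 30; 376; 480; 588]; [:: 93; 478; 504; 588]; [:: 4; 165; 485; 588];
  [:: 49; 80; 240; 591]; [:: 79; 162; 340; 591]; [:: 151; 229; 387; 591]; [:: 209; 278; 469; 591];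
  [:: 279; 391; 496; 591]; [:: 2; 395; 437; 591]; [:: 99; 459; 501; 591]; [:: 21; 173; 521; 591];
  [:: 54; 86; 222; 594]; [:: 115; 179; 338; 594]; [:: 180; 256; 373; 594]; [:: 248; 282; 459; 594];
  [:: 307; 383; 493; 594]; [:: 10; 354; 478; 594]; [:: 84; 470; 516; 594]; [:: 41; 205; 503; 594];
  [:: 56; 145; 337; 597]; [:: 110; 159; 248; 597]; [:: 238; 344; 493; 597]; [:: 75; 294; 482; 597];
  [:: 130; 354; 506; 597]; [:: 13; 421; 492; 597]; [:: 197; 347; 477; 597]; [:: 51; 240; 382; 597];
  [:: 54; 157; 331; 600]; [:: 104; 192; 247; 600]; [:: 237; 335; 519; 600]; [:: 99; 285; 429; 600];
  [:: 121; 383; 517; 600]; [:: 20; 416; 515; 600]; [:: 161; 388; 463; 600]; [:: 19; 209; 408; 600];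
  [:: 10; 178; 340; 603]; [:: 101; 204; 258; 603]; [:: 251; 281; 539; 603]; [:: 117; 282; 418; 603];
  [:: 121; 382; 504; 603]; [:: 54; 438; 529; 603]; [:: 188; 345; 476; 603]; [:: 14; 265; 410; 603];
  [:: 44; 158; 279; 606]; [:: 77; 168; 243; 606]; [:: 268; 286; 476; 606]; [:: 132; 284; 369; 606];
  [:: 79; 451; 507; 606]; [:: 52; 380; 456; 606]; [:: 184; 358; 545; 606]; [:: 60; 254; 502; 606];
  [:: 12; 194; 337; 609]; [:: 111; 177; 241; 609]; [:: 230; 296; 420; 609]; [:: 91; 318; 383; 609];
  [:: 83; 440; 503; 609]; [:: 38; 409; 418; 609]; [:: 181; 381; 511; 609]; [:: 7; 228; 540; 609];
  [:: 28; 176; 326; 612]; [:: 124; 153; 239; 612]; [:: 231; 288; 415; 612]; [:: 116; 292; 400; 612];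
  [:: 105; 429; 514; 612]; [:: 48; 369; 440; 612]; [:: 160; 410; 519; 612]; [:: 47; 247; 506; 612];
  [:: 64; 115; 269; 615]; [:: 83; 192; 520; 615]; [:: 175; 270; 408; 615]; [:: 265; 298; 540; 615];
  [:: 367; 416; 500; 615]; [:: 45; 342; 362; 615]; [:: 123; 284; 418; 615]; [:: 11; 149; 468; 615];
  [:: 19; 72; 272; 618]; [:: 109; 159; 547; 618]; [:: 205; 228; 401; 618]; [:: 247; 314; 486; 618];
  [:: 372; 453; 521; 618]; [:: 36; 325; 397; 618]; [:: 131; 309; 479; 618]; [:: 17; 182; 418; 618];
  [:: 52; 89; 272; 621]; [:: 123; 192; 517; 621]; [:: 139; 240; 352; 621]; [:: 232; 327; 537; 621];
  [:: 368; 463; 500; 621]; [:: 33; 287; 408; 621]; [:: 121; 289; 420; 621]; [:: 47; 158; 449; 621];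
  [:: 42; 111; 419; 624]; [:: 106; 256; 277; 624]; [:: 188; 287; 459; 624]; [:: 239; 385; 418; 624];
  [:: 180; 216; 520; 624]; [:: 35; 139; 387; 624]; [:: 80; 380; 497; 624]; [:: 22; 318; 510; 624];
  [:: 65; 135; 475; 627]; [:: 79; 227; 287; 627]; [:: 178; 312; 461; 627]; [:: 261; 396; 450; 627];
  [:: 194; 271; 497; 627]; [:: 13; 162; 377; 627]; [:: 83; 391; 498; 627]; [:: 6; 286; 529; 627];
  [:: 55; 126; 453; 630]; [:: 109; 261; 306; 630]; [:: 177; 334; 415; 630]; [:: 262; 413; 461; 630];
  [:: 181; 215; 528; 630]; [:: 24; 179; 382; 630]; [:: 113; 348; 502; 630]; [:: 59; 344; 488; 630];
  [:: 62; 89; 302; 633]; [:: 123; 171; 262; 633]; [:: 227; 295; 529; 633]; [:: 187; 318; 469; 633];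
  [:: 140; 410; 500; 633]; [:: 61; 476; 528; 633]; [:: 100; 381; 450; 633]; [:: 15; 222; 370; 633];
  [:: 67; 126; 330; 636]; [:: 70; 163; 267; 636]; [:: 241; 311; 514; 636]; [:: 170; 286; 429; 636];
  [:: 168; 392; 533; 636]; [:: 30; 448; 498; 636]; [:: 86; 363; 428; 636]; [:: 29; 254; 364; 636];
  [:: 18; 106; 328; 639]; [:: 104; 176; 260; 639]; [:: 240; 315; 520; 639]; [:: 153; 302; 464; 639];
  [:: 202; 371; 524; 639]; [:: 44; 468; 507; 639]; [:: 126; 375; 463; 639]; [:: 22; 223; 403; 639];
  [:: 27; 92; 213; 642]; [:: 124; 185; 551; 642]; [:: 174; 211; 379; 642]; [:: 248; 451; 511; 642];
  [:: 334; 398; 510; 642]; [:: 1; 399; 446; 642]; [:: 126; 300; 426; 642]; [:: 11; 205; 329; 642];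
  [:: 66; 111; 258; 645]; [:: 80; 205; 542; 645]; [:: 149; 256; 384; 645]; [:: 260; 419; 550; 645];
  [:: 295; 409; 501; 645]; [:: 7; 383; 462; 645]; [:: 76; 291; 460; 645]; [:: 59; 159; 317; 645];
  [:: 12; 76; 252; 648]; [:: 102; 189; 542; 648]; [:: 202; 214; 389; 648]; [:: 212; 432; 535; 648];
  [:: 304; 360; 525; 648]; [:: 25; 409; 469; 648]; [:: 122; 324; 431; 648]; [:: 11; 173; 314; 648];
  [:: 2; 104; 374; 651]; [:: 114; 140; 479; 651]; [:: 145; 344; 390; 651]; [:: 250; 370; 468; 651];
  [:: 330; 436; 500; 651]; [:: 55; 218; 310; 651]; [:: 112; 228; 534; 651]; [:: 30; 183; 547; 651];
  [:: 49; 107; 367; 654]; [:: 126; 200; 458; 654]; [:: 166; 321; 389; 654]; [:: 256; 357; 456; 654];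
  [:: 328; 430; 513; 654]; [:: 6; 224; 278; 654]; [:: 103; 252; 484; 654]; [:: 59; 174; 515; 654];
  [:: 9; 104; 372; 657]; [:: 132; 170; 425; 657]; [:: 196; 316; 376; 657]; [:: 238; 407; 447; 657];
  [:: 344; 433; 502; 657]; [:: 35; 257; 321; 657]; [:: 118; 243; 530; 657]; [:: 4; 138; 549; 657];
  [:: 15; 118; 336; 660]; [:: 117; 268; 363; 660]; [:: 154; 225; 334; 660]; [:: 299; 406; 417; 660];
  [:: 191; 377; 493; 660]; [:: 23; 153; 457; 660]; [:: 122; 440; 489; 660]; [:: 16; 209; 488; 660];
  [:: 46; 76; 329; 663]; [:: 81; 240; 393; 663]; [:: 154; 248; 324; 663]; [:: 328; 382; 476; 663];
  [:: 203; 413; 527; 663]; [:: 18; 177; 429; 663]; [:: 119; 478; 529; 663]; [:: 44; 256; 522; 663];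
  [:: 14; 70; 322; 666]; [:: 102; 224; 390; 666]; [:: 190; 211; 326; 666]; [:: 312; 352; 472; 666];
  [:: 194; 386; 546; 666]; [:: 46; 189; 482; 666]; [:: 131; 420; 518; 666]; [:: 42; 237; 502; 666];
  [:: 6; 113; 293; 669]; [:: 88; 168; 494; 669]; [:: 178; 211; 330; 669]; [:: 301; 354; 517; 669];
  [:: 248; 425; 534; 669]; [:: 20; 264; 352; 669]; [:: 99; 353; 435; 669]; [:: 28; 170; 466; 669];
  [:: 43; 122; 331; 672]; [:: 121; 183; 539; 672]; [:: 142; 264; 305; 672]; [:: 318; 406; 517; 672];
  [:: 265; 448; 507; 672]; [:: 45; 251; 410; 672]; [:: 117; 351; 437; 672]; [:: 29; 173; 441; 672];
  [:: 59; 137; 318; 675]; [:: 94; 204; 533; 675]; [:: 187; 248; 319; 675]; [:: 281; 413; 517; 675];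
  [:: 243; 474; 519; 675]; [:: 43; 241; 348; 675]; [:: 84; 406; 451; 675]; [:: 18; 140; 449; 675];
  [:: 11; 100; 347; 678]; [:: 123; 148; 267; 678]; [:: 159; 292; 373; 678]; [:: 256; 408; 485; 678];
  [:: 233; 315; 420; 678]; [:: 45; 329; 495; 678]; [:: 125; 439; 511; 678]; [:: 49; 182; 476; 678];
  [:: 68; 80; 379; 681]; [:: 70; 160; 243; 681]; [:: 168; 283; 399; 681]; [:: 238; 353; 522; 681];
  [:: 251; 303; 415; 681]; [:: 18; 335; 523; 681]; [:: 108; 479; 488; 681]; [:: 34; 140; 429; 681];
  [:: 47; 93; 390; 684]; [:: 122; 187; 234; 684]; [:: 201; 340; 398; 684]; [:: 217; 400; 535; 684];
  [:: 266; 339; 464; 684]; [:: 66; 323; 527; 684]; [:: 97; 450; 504; 684]; [:: 28; 191; 469; 684];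
  [:: 60; 120; 305; 687]; [:: 128; 180; 268; 687]; [:: 140; 294; 446; 687]; [:: 242; 319; 398; 687];
  [:: 249; 430; 487; 687]; [:: 65; 352; 465; 687]; [:: 94; 384; 497; 687]; [:: 10; 145; 531; 687];
  [:: 9; 122; 277; 690]; [:: 118; 188; 231; 690]; [:: 193; 299; 460; 690]; [:: 262; 309; 380; 690];
  [:: 260; 417; 507; 690]; [:: 29; 388; 458; 690]; [:: 114; 366; 502; 690]; [:: 22; 141; 515; 690];
  [:: 6; 136; 339; 693]; [:: 81; 187; 227; 693]; [:: 189; 289; 474; 693]; [:: 228; 284; 350; 693];
  [:: 259; 482; 530; 693]; [:: 8; 355; 427; 693]; [:: 98; 381; 519; 693]; [:: 43; 167; 490; 693];
  [:: 33; 105; 456; 696]; [:: 94; 173; 403; 696]; [:: 171; 210; 472; 696]; [:: 305; 380; 419; 696];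
  [:: 215; 354; 498; 696]; [:: 23; 208; 328; 696]; [:: 113; 342; 505; 696]; [:: 13; 154; 539; 696];
  [:: 19; 128; 439; 699]; [:: 102; 177; 375; 699]; [:: 154; 274; 479; 699]; [:: 339; 394; 435; 699];
  [:: 270; 413; 540; 699]; [:: 63; 242; 314; 699]; [:: 112; 319; 547; 699]; [:: 44; 194; 551; 699];
  [:: 11; 130; 458; 702]; [:: 101; 193; 383; 702]; [:: 176; 242; 471; 702]; [:: 340; 402; 469; 702];
  [:: 247; 379; 543; 702]; [:: 49; 252; 279; 702]; [:: 72; 320; 514; 702]; [:: 66; 183; 521; 702];
  [:: 0; 121; 410; 705]; [:: 96; 181; 487; 705]; [:: 195; 339; 367; 705]; [:: 233; 396; 483; 705];
  [:: 289; 436; 497; 705]; [:: 23; 268; 329; 705]; [:: 80; 273; 446; 705]; [:: 52; 149; 480; 705];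
  [:: 57; 114; 379; 708]; [:: 119; 178; 496; 708]; [:: 153; 340; 348; 708]; [:: 228; 383; 549; 708];
  [:: 305; 469; 551; 708]; [:: 23; 251; 336; 708]; [:: 136; 271; 419; 708]; [:: 1; 146; 444; 708];
  [:: 39; 107; 393; 711]; [:: 94; 154; 493; 711]; [:: 150; 314; 356; 711]; [:: 250; 394; 519; 711];
  [:: 276; 478; 536; 711]; [:: 65; 252; 343; 711]; [:: 78; 233; 473; 711]; [:: 55; 167; 480; 711];
  [:: 8; 125; 302; 714]; [:: 103; 181; 208; 714]; [:: 264; 279; 488; 714]; [:: 153; 298; 347; 714];
  [:: 158; 476; 541; 714]; [:: 39; 379; 516; 714]; [:: 117; 393; 429; 714]; [:: 37; 236; 451; 714];
  [:: 36; 111; 312; 717]; [:: 80; 192; 257; 717]; [:: 214; 277; 536; 717]; [:: 164; 299; 389; 717];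
  [:: 202; 466; 502; 717]; [:: 25; 355; 495; 717]; [:: 94; 408; 482; 717]; [:: 17; 231; 423; 717];
  [:: 28; 112; 301; 720]; [:: 135; 182; 267; 720]; [:: 236; 278; 503; 720]; [:: 196; 321; 407; 720];
  [:: 168; 447; 502; 720]; [:: 68; 391; 534; 720]; [:: 107; 363; 436; 720]; [:: 21; 259; 428; 720];
  [:: 51; 133; 384; 723]; [:: 86; 194; 250; 723]; [:: 186; 385; 431; 723]; [:: 215; 303; 386; 723];
  [:: 270; 448; 528; 723]; [:: 29; 320; 414; 723]; [:: 120; 319; 521; 723]; [:: 7; 202; 487; 723];
  [:: 18; 72; 413; 726]; [:: 85; 205; 247; 726]; [:: 143; 396; 427; 726]; [:: 251; 309; 370; 726];
  [:: 252; 447; 513; 726]; [:: 29; 296; 455; 726]; [:: 86; 319; 545; 726]; [:: 49; 165; 520; 726];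
  [:: 6; 110; 412; 729]; [:: 69; 174; 232; 729]; [:: 175; 383; 447; 729]; [:: 245; 294; 372; 729];
  [:: 237; 434; 522; 729]; [:: 20; 290; 436; 729]; [:: 127; 286; 551; 729]; [:: 13; 173; 535; 729];
  [:: 63; 105; 436; 732]; [:: 125; 227; 321; 732]; [:: 192; 237; 461; 732]; [:: 343; 412; 480; 732];
  [:: 142; 308; 522; 732]; [:: 41; 143; 360; 732]; [:: 124; 350; 508; 732]; [:: 64; 208; 551; 732];
  [:: 68; 73; 369; 735]; [:: 98; 200; 521; 735]; [:: 175; 248; 377; 735]; [:: 296; 400; 519; 735];
  [:: 214; 444; 517; 735]; [:: 28; 252; 330; 735]; [:: 78; 337; 457; 735]; [:: 66; 195; 455; 735];
  [:: 66; 91; 244; 738]; [:: 102; 175; 423; 738]; [:: 167; 249; 332; 738]; [:: 263; 428; 503; 738];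
  [:: 303; 385; 481; 738]; [:: 4; 316; 514; 738]; [:: 77; 378; 525; 738]; [:: 65; 153; 407; 738];
  [:: 46; 85; 336; 741]; [:: 116; 146; 385; 741]; [:: 184; 251; 332; 741]; [:: 298; 368; 455; 741];
  [:: 246; 369; 508; 741]; [:: 29; 226; 438; 741]; [:: 96; 478; 522; 741]; [:: 18; 174; 509; 741];
  [:: 64; 93; 238; 744]; [:: 119; 150; 331; 744]; [:: 170; 216; 388; 744]; [:: 227; 327; 482; 744];
  [:: 287; 404; 506; 744]; [:: 42; 351; 436; 744]; [:: 109; 456; 543; 744]; [:: 23; 151; 496; 744];
  [:: 4; 128; 297; 747]; [:: 85; 139; 431; 747]; [:: 206; 234; 323; 747]; [:: 310; 442; 539; 747];
  [:: 248; 382; 414; 747]; [:: 15; 238; 489; 747]; [:: 78; 410; 508; 747]; [:: 50; 177; 399; 747];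
  [:: 27; 100; 444; 750]; [:: 83; 138; 350; 750]; [:: 149; 209; 446; 750]; [:: 307; 402; 445; 750];
  [:: 268; 346; 496; 750]; [:: 19; 207; 335; 750]; [:: 81; 297; 545; 750]; [:: 65; 205; 486; 750];
  [:: 16; 113; 233; 753]; [:: 124; 182; 457; 753]; [:: 151; 238; 495; 753]; [:: 249; 411; 434; 753];
  [:: 331; 471; 506; 753]; [:: 54; 368; 538; 753]; [:: 117; 284; 397; 753]; [:: 5; 156; 339; 753];
  [:: 28; 118; 461; 756]; [:: 135; 262; 286; 756]; [:: 200; 210; 417; 756]; [:: 285; 378; 430; 756];
  [:: 183; 329; 529; 756]; [:: 62; 139; 412; 756]; [:: 98; 377; 503; 756]; [:: 9; 236; 492; 756];
  [:: 45; 128; 276; 759]; [:: 72; 168; 405; 759]; [:: 203; 307; 480; 759]; [:: 230; 338; 397; 759];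
  [:: 407; 445; 515; 759]; [:: 22; 241; 482; 759]; [:: 70; 249; 513; 759]; [:: 17; 184; 511; 759];
  [:: 22; 71; 388; 762]; [:: 117; 185; 466; 762]; [:: 163; 233; 354; 762]; [:: 327; 356; 462; 762];
  [:: 241; 416; 532; 762]; [:: 23; 219; 298; 762]; [:: 70; 332; 539; 762]; [:: 63; 186; 549; 762];
  [:: 68; 79; 420; 765]; [:: 84; 195; 254; 765]; [:: 241; 284; 437; 765]; [:: 160; 412; 436; 765];
  [:: 167; 318; 540; 765]; [:: 21; 316; 389; 765]; [:: 86; 345; 490; 765]; [:: 43; 273; 551; 765];
  [:: 11; 77; 388; 768]; [:: 130; 256; 292; 768]; [:: 204; 267; 363; 768]; [:: 284; 386; 517; 768];
  [:: 160; 327; 425; 768]; [:: 30; 161; 531; 768]; [:: 72; 417; 491; 768]; [:: 7; 218; 469; 768];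
  [:: 67; 85; 327; 771]; [:: 131; 177; 234; 771]; [:: 248; 301; 424; 771]; [:: 149; 296; 370; 771];
  [:: 178; 468; 521; 771]; [:: 45; 402; 458; 771]; [:: 78; 365; 486; 771]; [:: 17; 253; 499; 771];
  [:: 56; 176; 302; 774]; [:: 128; 145; 245; 774]; [:: 271; 282; 438; 774]; [:: 117; 304; 499; 774];
  [:: 97; 354; 431; 774]; [:: 67; 472; 504; 774]; [:: 144; 373; 521; 774]; [:: 18; 267; 380; 774];
  [:: 101; 342; 392; 455]; [:: 61; 179; 386; 489]; [:: 5; 81; 437; 514]; [:: 126; 225; 326; 362];
  [:: 35; 174; 243; 417]; [:: 26; 111; 405; 525]; [:: 28; 270; 450; 493]; [:: 66; 74; 151; 279];
  [:: 109; 238; 300; 387]; [:: 11; 252; 280; 529]; [:: 73; 155; 207; 477]; [:: 120; 183; 361; 414];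
  [:: 17; 187; 324; 502]; [:: 62; 239; 413; 433]; [:: 102; 244; 360; 463]; [:: 188; 344; 454; 495];
  [:: 172; 310; 361; 503]; [:: 48; 180; 252; 290]; [:: 174; 293; 447; 523]; [:: 82; 292; 395; 523];
  [:: 57; 79; 240; 508]; [:: 199; 248; 372; 462]].

Definition base_blocks_228 : seq (seq N) := [::
  [:: 47; 84; 231; 552]; [:: 112; 170; 523; 552]; [:: 199; 236; 455; 552]; [:: 265; 318; 486; 552];
  [:: 366; 457; 527; 552]; [:: 31; 289; 438; 552]; [:: 98; 296; 374; 552]; [:: 63; 201; 394; 552];
  [:: 20; 131; 269; 555]; [:: 81; 158; 516; 555]; [:: 196; 208; 476; 555]; [:: 264; 308; 509; 555];
  [:: 347; 469; 490; 555]; [:: 37; 315; 474; 555]; [:: 79; 322; 373; 555]; [:: 21; 183; 399; 555];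
  [:: 65; 85; 241; 558]; [:: 110; 164; 542; 558]; [:: 196; 231; 428; 558]; [:: 218; 304; 544; 558];
  [:: 352; 472; 498; 558]; [:: 40; 287; 444; 558]; [:: 126; 276; 357; 558]; [:: 6; 204; 407; 558];
  [:: 28; 75; 277; 561]; [:: 133; 161; 498; 561]; [:: 189; 268; 288; 561]; [:: 311; 378; 550; 561];
  [:: 275; 440; 494; 561]; [:: 60; 216; 374; 561]; [:: 101; 382; 448; 561]; [:: 14; 196; 453; 561];
  [:: 54; 103; 310; 564]; [:: 71; 156; 497; 564]; [:: 169; 224; 294; 564]; [:: 329; 405; 489; 564];
  [:: 213; 435; 532; 564]; [:: 65; 232; 395; 564]; [:: 117; 376; 419; 564]; [:: 37; 179; 469; 564];
  [:: 20; 95; 295; 567]; [:: 108; 139; 511; 567]; [:: 143; 216; 315; 567]; [:: 296; 345; 548; 567];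
  [:: 220; 475; 486; 567]; [:: 13; 233; 371; 567]; [:: 91; 373; 465; 567]; [:: 42; 159; 425; 567];
  [:: 18; 106; 237; 570]; [:: 92; 155; 356; 570]; [:: 145; 221; 544; 570]; [:: 262; 412; 423; 570];
  [:: 324; 354; 498; 570]; [:: 59; 458; 545; 570]; [:: 120; 316; 415; 570]; [:: 22; 138; 326; 570];
  [:: 3; 95; 216; 573]; [:: 123; 158; 398; 573]; [:: 169; 209; 487; 573]; [:: 211; 370; 473; 573];
  [:: 325; 399; 528; 573]; [:: 8; 478; 491; 573]; [:: 118; 341; 468; 573]; [:: 22; 195; 336; 573];
  [:: 60; 132; 246; 576]; [:: 100; 143; 347; 576]; [:: 151; 251; 547; 576]; [:: 274; 397; 475; 576];
  [:: 299; 360; 525; 576]; [:: 23; 432; 536; 576]; [:: 80; 300; 434; 576]; [:: 61; 189; 295; 576];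
  [:: 23; 117; 320; 579]; [:: 118; 159; 388; 579]; [:: 205; 309; 482; 579]; [:: 247; 283; 390; 579];
  [:: 410; 456; 496; 579]; [:: 31; 257; 457; 579]; [:: 113; 216; 483; 579]; [:: 57; 143; 485; 579];
  [:: 39; 97; 321; 582]; [:: 92; 143; 402; 582]; [:: 138; 301; 448; 582]; [:: 212; 293; 395; 582];
  [:: 361; 446; 551; 582]; [:: 32; 234; 417; 582]; [:: 126; 271; 487; 582]; [:: 55; 181; 543; 582];
  [:: 58; 74; 304; 585]; [:: 72; 142; 413; 585]; [:: 173; 317; 423; 585]; [:: 243; 336; 373; 585];
  [:: 366; 430; 540; 585]; [:: 54; 250; 452; 585]; [:: 88; 212; 530; 585]; [:: 38; 138; 529; 585];
  [:: 1; 103; 391; 588]; [:: 75; 171; 215; 588]; [:: 169; 354; 452; 588]; [:: 234; 314; 410; 588];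
  [:: 220; 474; 536; 588]; [:: 15; 328; 481; 588]; [:: 122; 336; 513; 588]; [:: 56; 155; 541; 588];
  [:: 66; 116; 376; 591]; [:: 97; 192; 245; 591]; [:: 163; 396; 427; 591]; [:: 222; 310; 404; 591];
  [:: 250; 479; 527; 591]; [:: 44; 315; 420; 591]; [:: 72; 326; 501; 591]; [:: 49; 176; 508; 591];
  [:: 44; 75; 397; 594]; [:: 122; 201; 212; 594]; [:: 178; 399; 462; 594]; [:: 219; 339; 404; 594];
  [:: 232; 472; 539; 594]; [:: 7; 308; 434; 594]; [:: 133; 325; 522; 594]; [:: 51; 197; 499; 594];
  [:: 5; 134; 291; 597]; [:: 78; 195; 272; 597]; [:: 217; 301; 492; 597]; [:: 142; 311; 368; 597];
  [:: 185; 443; 511; 597]; [:: 30; 375; 539; 597]; [:: 130; 379; 423; 597]; [:: 34; 258; 415; 597];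
  [:: 8; 117; 329; 600]; [:: 79; 203; 253; 600]; [:: 243; 312; 519; 600]; [:: 138; 340; 372; 600];
  [:: 181; 476; 529; 600]; [:: 63; 397; 509; 600]; [:: 71; 407; 459; 600]; [:: 13; 263; 430; 600];
  [:: 38; 112; 337; 603]; [:: 113; 181; 252; 603]; [:: 257; 284; 549; 603]; [:: 173; 315; 346; 603];
  [:: 171; 470; 499; 603]; [:: 48; 410; 530; 603]; [:: 78; 387; 459; 603]; [:: 25; 241; 415; 603];
  [:: 42; 71; 396; 606]; [:: 97; 163; 251; 606]; [:: 237; 404; 508; 606]; [:: 174; 289; 412; 606];
  [:: 161; 429; 492; 606]; [:: 35; 320; 500; 606]; [:: 93; 339; 428; 606]; [:: 19; 247; 439; 606];
  [:: 42; 94; 408; 609]; [:: 75; 168; 267; 609]; [:: 223; 359; 527; 609]; [:: 164; 325; 388; 609];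
  [:: 169; 417; 508; 609]; [:: 8; 281; 486; 609]; [:: 134; 297; 479; 609]; [:: 67; 233; 439; 609];
  [:: 66; 129; 372; 612]; [:: 113; 143; 271; 612]; [:: 230; 410; 492; 612]; [:: 145; 280; 388; 612];
  [:: 138; 414; 506; 612]; [:: 62; 299; 511; 612]; [:: 121; 285; 482; 612]; [:: 49; 222; 454; 612];
  [:: 20; 84; 312; 615]; [:: 89; 256; 464; 615]; [:: 153; 261; 332; 615]; [:: 340; 436; 551; 615];
  [:: 154; 362; 432; 615]; [:: 1; 179; 490; 615]; [:: 100; 351; 510; 615]; [:: 42; 254; 382; 615];
  [:: 38; 95; 343; 618]; [:: 115; 208; 424; 618]; [:: 179; 273; 327; 618]; [:: 335; 456; 498; 618];
  [:: 183; 393; 476; 618]; [:: 64; 178; 518; 618]; [:: 105; 403; 511; 618]; [:: 63; 266; 410; 618];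
  [:: 56; 73; 278; 621]; [:: 114; 223; 435; 621]; [:: 154; 228; 325; 621]; [:: 303; 419; 496; 621];
  [:: 179; 355; 448; 621]; [:: 43; 153; 486; 621]; [:: 137; 347; 527; 621]; [:: 27; 254; 387; 621];
  [:: 62; 116; 373; 624]; [:: 130; 192; 259; 624]; [:: 231; 303; 386; 624]; [:: 184; 396; 438; 624];
  [:: 203; 329; 537; 624]; [:: 12; 340; 427; 624]; [:: 105; 470; 485; 624]; [:: 1; 245; 508; 624];
  [:: 54; 124; 366; 627]; [:: 108; 190; 251; 627]; [:: 250; 335; 376; 627]; [:: 173; 353; 435; 627];
  [:: 183; 328; 549; 627]; [:: 40; 300; 463; 627]; [:: 80; 416; 485; 627]; [:: 5; 219; 547; 627];
  [:: 55; 132; 359; 630]; [:: 86; 167; 249; 630]; [:: 257; 304; 375; 630]; [:: 186; 373; 480; 630];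
  [:: 142; 327; 486; 630]; [:: 29; 341; 448; 630]; [:: 91; 437; 518; 630]; [:: 0; 211; 505; 630];
  [:: 54; 174; 396; 633]; [:: 82; 185; 217; 633]; [:: 227; 342; 398; 633]; [:: 93; 373; 482; 633];
  [:: 116; 278; 509; 633]; [:: 28; 283; 424; 633]; [:: 193; 432; 531; 633]; [:: 17; 222; 487; 633];
  [:: 48; 163; 381; 636]; [:: 117; 150; 235; 636]; [:: 254; 296; 386; 636]; [:: 134; 355; 428; 636];
  [:: 115; 301; 528; 636]; [:: 49; 336; 427; 636]; [:: 194; 468; 529; 636]; [:: 29; 219; 521; 636];
  [:: 18; 161; 405; 639]; [:: 107; 196; 259; 639]; [:: 233; 295; 353; 639]; [:: 109; 355; 431; 639];
  [:: 126; 291; 514; 639]; [:: 58; 311; 451; 639]; [:: 201; 432; 548; 639]; [:: 14; 213; 495; 639];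
  [:: 5; 177; 344; 642]; [:: 76; 160; 226; 642]; [:: 224; 343; 351; 642]; [:: 126; 321; 463; 642];
  [:: 98; 401; 538; 642]; [:: 58; 382; 437; 642]; [:: 179; 426; 498; 642]; [:: 12; 252; 488; 642];
  [:: 39; 176; 329; 645]; [:: 132; 204; 268; 645]; [:: 260; 289; 353; 645]; [:: 110; 279; 418; 645];
  [:: 133; 349; 507; 645]; [:: 14; 378; 449; 645]; [:: 142; 447; 491; 645]; [:: 31; 210; 484; 645];
  [:: 16; 175; 314; 648]; [:: 95; 200; 241; 648]; [:: 236; 343; 346; 648]; [:: 112; 285; 415; 648];
  [:: 135; 390; 518; 648]; [:: 24; 365; 470; 648]; [:: 150; 435; 535; 648]; [:: 68; 231; 501; 648];
  [:: 62; 88; 214; 651]; [:: 117; 181; 494; 651]; [:: 186; 233; 406; 651]; [:: 255; 459; 492; 651];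
  [:: 287; 369; 496; 651]; [:: 45; 371; 448; 651]; [:: 92; 336; 431; 651]; [:: 46; 179; 334; 651];
  [:: 68; 83; 259; 654]; [:: 127; 145; 535; 654]; [:: 180; 242; 394; 654]; [:: 234; 467; 542; 654];
  [:: 300; 411; 534; 654]; [:: 9; 374; 462; 654]; [:: 96; 286; 472; 654]; [:: 1; 146; 320; 654];
  [:: 41; 117; 223; 657]; [:: 134; 163; 486; 657]; [:: 150; 218; 355; 657]; [:: 252; 466; 493; 657];
  [:: 310; 357; 548; 657]; [:: 60; 395; 434; 657]; [:: 118; 302; 474; 657]; [:: 7; 200; 288; 657];
  [:: 33; 113; 264; 660]; [:: 69; 176; 468; 660]; [:: 142; 214; 340; 660]; [:: 218; 466; 516; 660];
  [:: 336; 398; 455; 660]; [:: 41; 302; 488; 660]; [:: 82; 405; 484; 660]; [:: 10; 141; 394; 660];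
  [:: 25; 116; 217; 663]; [:: 78; 192; 479; 663]; [:: 176; 245; 310; 663]; [:: 270; 426; 492; 663];
  [:: 312; 410; 478; 663]; [:: 15; 311; 515; 663]; [:: 127; 390; 505; 663]; [:: 47; 166; 355; 663];
  [:: 14; 83; 248; 666]; [:: 75; 196; 415; 666]; [:: 189; 213; 325; 666]; [:: 232; 476; 492; 666];
  [:: 291; 410; 435; 666]; [:: 55; 332; 551; 666]; [:: 85; 390; 535; 666]; [:: 0; 194; 391; 666];
  [:: 33; 71; 405; 669]; [:: 84; 225; 334; 669]; [:: 165; 302; 397; 669]; [:: 253; 395; 493; 669];
  [:: 146; 230; 467; 669]; [:: 44; 178; 528; 669]; [:: 85; 442; 536; 669]; [:: 61; 333; 414; 669];
  [:: 48; 127; 371; 672]; [:: 107; 219; 301; 672]; [:: 174; 317; 369; 672]; [:: 232; 349; 490; 672];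
  [:: 173; 215; 464; 672]; [:: 20; 181; 546; 672]; [:: 99; 448; 485; 672]; [:: 40; 324; 426; 672];
  [:: 0; 105; 406; 675]; [:: 76; 267; 316; 675]; [:: 138; 329; 398; 675]; [:: 262; 402; 493; 675];
  [:: 206; 254; 416; 675]; [:: 53; 175; 504; 675]; [:: 77; 418; 491; 675]; [:: 16; 324; 456; 675];
  [:: 0; 147; 346; 678]; [:: 118; 157; 317; 678]; [:: 243; 322; 411; 678]; [:: 113; 371; 473; 678];
  [:: 81; 265; 497; 678]; [:: 4; 233; 417; 678]; [:: 167; 463; 487; 678]; [:: 65; 333; 531; 678];
  [:: 63; 202; 346; 681]; [:: 108; 179; 337; 681]; [:: 253; 279; 354; 681]; [:: 79; 356; 481; 681];
  [:: 134; 254; 518; 681]; [:: 1; 264; 437; 681]; [:: 186; 456; 532; 681]; [:: 35; 329; 528; 681];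
  [:: 21; 191; 406; 684]; [:: 74; 180; 291; 684]; [:: 266; 287; 378; 684]; [:: 81; 374; 432; 684];
  [:: 79; 234; 527; 684]; [:: 64; 238; 451; 684]; [:: 163; 422; 523; 684]; [:: 20; 322; 495; 684];
  [:: 32; 122; 421; 687]; [:: 132; 138; 224; 687]; [:: 264; 403; 423; 687]; [:: 200; 340; 455; 687];
  [:: 154; 377; 513; 687]; [:: 45; 287; 372; 687]; [:: 97; 288; 521; 687]; [:: 67; 220; 544; 687];
  [:: 38; 135; 452; 690]; [:: 82; 195; 270; 690]; [:: 253; 401; 448; 690]; [:: 143; 335; 414; 690];
  [:: 193; 375; 538; 690]; [:: 42; 306; 385; 690]; [:: 104; 280; 516; 690]; [:: 61; 209; 524; 690];
  [:: 23; 82; 441; 693]; [:: 104; 171; 214; 693]; [:: 266; 363; 473; 693]; [:: 179; 333; 451; 693];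
  [:: 190; 346; 533; 693]; [:: 6; 316; 404; 693]; [:: 72; 329; 535; 693]; [:: 7; 213; 486; 693];
  [:: 29; 132; 365; 696]; [:: 92; 152; 328; 696]; [:: 177; 211; 375; 696]; [:: 315; 358; 540; 696];
  [:: 258; 281; 479; 696]; [:: 31; 269; 503; 696]; [:: 70; 457; 514; 696]; [:: 51; 145; 459; 696];
  [:: 51; 102; 368; 699]; [:: 95; 189; 306; 699]; [:: 169; 274; 405; 699]; [:: 326; 349; 520; 699];
  [:: 273; 331; 469; 699]; [:: 32; 209; 531; 699]; [:: 73; 426; 491; 699]; [:: 61; 152; 449; 699];
  [:: 16; 120; 398; 702]; [:: 74; 166; 344; 702]; [:: 179; 217; 351; 702]; [:: 277; 382; 524; 702];
  [:: 219; 297; 417; 702]; [:: 18; 257; 526; 702]; [:: 133; 461; 525; 702]; [:: 50; 162; 460; 702];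
  [:: 46; 124; 397; 705]; [:: 116; 227; 288; 705]; [:: 205; 228; 393; 705]; [:: 301; 371; 518; 705];
  [:: 179; 311; 444; 705]; [:: 21; 192; 546; 705]; [:: 114; 469; 529; 705]; [:: 38; 223; 440; 705];
  [:: 3; 85; 347; 708]; [:: 116; 232; 298; 708]; [:: 161; 248; 367; 708]; [:: 344; 372; 534; 708];
  [:: 144; 282; 417; 708]; [:: 44; 202; 538; 708]; [:: 102; 445; 500; 708]; [:: 46; 261; 437; 708];
  [:: 5; 106; 354; 711]; [:: 125; 222; 278; 711]; [:: 183; 253; 353; 711]; [:: 297; 352; 484; 711];
  [:: 169; 319; 429; 711]; [:: 1; 176; 539; 711]; [:: 72; 430; 537; 711]; [:: 15; 272; 449; 711];
  [:: 66; 111; 304; 714]; [:: 92; 165; 256; 714]; [:: 205; 282; 492; 714]; [:: 260; 308; 454; 714];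
  [:: 252; 398; 533; 714]; [:: 1; 417; 496; 714]; [:: 112; 399; 425; 714]; [:: 38; 149; 412; 714];
  [:: 17; 110; 337; 717]; [:: 76; 202; 229; 717]; [:: 176; 297; 486; 717]; [:: 272; 311; 481; 717];
  [:: 258; 345; 530; 717]; [:: 30; 468; 520; 717]; [:: 123; 361; 467; 717]; [:: 58; 165; 413; 717];
  [:: 52; 100; 283; 720]; [:: 108; 173; 238; 720]; [:: 144; 300; 513; 720]; [:: 212; 299; 430; 720];
  [:: 249; 406; 491; 720]; [:: 53; 465; 514; 720]; [:: 89; 386; 473; 720]; [:: 6; 154; 354; 720];
  [:: 32; 93; 427; 723]; [:: 109; 141; 318; 723]; [:: 190; 349; 453; 723]; [:: 274; 319; 455; 723];
  [:: 329; 413; 484; 723]; [:: 45; 275; 384; 723]; [:: 110; 210; 527; 723]; [:: 31; 185; 486; 723];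
  [:: 65; 69; 421; 726]; [:: 91; 160; 288; 726]; [:: 179; 398; 465; 726]; [:: 234; 307; 458; 726];
  [:: 302; 411; 494; 726]; [:: 66; 259; 367; 726]; [:: 101; 209; 534; 726]; [:: 37; 189; 487; 726];
  [:: 11; 78; 472; 729]; [:: 109; 149; 315; 729]; [:: 174; 366; 435; 729]; [:: 236; 313; 425; 729];
  [:: 284; 388; 498; 729]; [:: 6; 264; 413; 729]; [:: 71; 220; 541; 729]; [:: 4; 169; 533; 729];
  [:: 64; 135; 284; 732]; [:: 109; 156; 513; 732]; [:: 188; 234; 340; 732]; [:: 294; 387; 496; 732];
  [:: 269; 438; 497; 732]; [:: 24; 265; 380; 732]; [:: 131; 400; 445; 732]; [:: 23; 190; 434; 732];
  [:: 30; 165; 474; 735]; [:: 126; 182; 306; 735]; [:: 249; 323; 421; 735]; [:: 97; 381; 467; 735];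
  [:: 131; 263; 493; 735]; [:: 38; 235; 395; 735]; [:: 151; 406; 503; 735]; [:: 49; 289; 507; 735];
  [:: 40; 121; 249; 738]; [:: 125; 199; 408; 738]; [:: 171; 229; 420; 738]; [:: 257; 289; 404; 738];
  [:: 367; 428; 486; 738]; [:: 66; 335; 427; 738]; [:: 72; 285; 538; 738]; [:: 38; 188; 539; 738];
  [:: 18; 86; 213; 741]; [:: 109; 155; 436; 741]; [:: 187; 238; 301; 741]; [:: 218; 369; 429; 741];
  [:: 308; 419; 508; 741]; [:: 58; 306; 350; 741]; [:: 99; 370; 540; 741]; [:: 44; 174; 548; 741];
  [:: 25; 169; 318; 744]; [:: 133; 144; 246; 744]; [:: 245; 278; 432; 744]; [:: 93; 301; 516; 744];
  [:: 131; 353; 454; 744]; [:: 54; 416; 499; 744]; [:: 179; 396; 503; 744]; [:: 17; 235; 388; 744];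
  [:: 31; 96; 311; 747]; [:: 109; 170; 226; 747]; [:: 254; 330; 389; 747]; [:: 174; 304; 549; 747];
  [:: 142; 372; 453; 747]; [:: 11; 400; 517; 747]; [:: 125; 473; 512; 747]; [:: 54; 252; 475; 747];
  [:: 68; 204; 441; 750]; [:: 127; 203; 229; 750]; [:: 264; 405; 454; 750]; [:: 78; 315; 458; 750];
  [:: 137; 398; 504; 750]; [:: 54; 308; 361; 750]; [:: 178; 340; 493; 750]; [:: 40; 248; 527; 750];
  [:: 46; 99; 309; 753]; [:: 136; 186; 235; 753]; [:: 152; 311; 434; 753]; [:: 260; 343; 504; 753];
  [:: 222; 397; 427; 753]; [:: 38; 438; 509; 753]; [:: 74; 366; 499; 753]; [:: 45; 163; 413; 753];
  [:: 27; 70; 227; 756]; [:: 120; 139; 446; 756]; [:: 162; 222; 326; 756]; [:: 238; 465; 521; 756];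
  [:: 288; 354; 433; 756]; [:: 1; 337; 522; 756]; [:: 83; 391; 547; 756]; [:: 32; 164; 395; 756];
  [:: 57; 71; 357; 759]; [:: 99; 243; 277; 759]; [:: 151; 265; 386; 759]; [:: 336; 409; 436; 759];
  [:: 150; 281; 531; 759]; [:: 38; 179; 432; 759]; [:: 112; 443; 521; 759]; [:: 67; 245; 529; 759];
  [:: 25; 69; 476; 762]; [:: 115; 249; 304; 762]; [:: 143; 290; 445; 762]; [:: 223; 352; 480; 762];
  [:: 157; 254; 540; 762]; [:: 26; 177; 345; 762]; [:: 137; 374; 505; 762]; [:: 12; 291; 548; 762];
  [:: 59; 125; 423; 765]; [:: 87; 177; 355; 765]; [:: 185; 303; 428; 765]; [:: 211; 356; 421; 765];
  [:: 316; 402; 532; 765]; [:: 1; 234; 344; 765]; [:: 115; 248; 543; 765]; [:: 45; 202; 509; 765];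
  [:: 20; 76; 315; 768]; [:: 131; 180; 455; 768]; [:: 163; 261; 328; 768]; [:: 317; 454; 499; 768];
  [:: 221; 393; 441; 768]; [:: 27; 250; 530; 768]; [:: 87; 376; 525; 768]; [:: 22; 143; 389; 768];
  [:: 52; 91; 476; 771]; [:: 77; 160; 250; 771]; [:: 177; 373; 423; 771]; [:: 249; 301; 415; 771];
  [:: 212; 386; 524; 771]; [:: 50; 333; 378; 771]; [:: 75; 296; 544; 771]; [:: 30; 179; 540; 771];
  [:: 34; 96; 238; 774]; [:: 137; 154; 324; 774]; [:: 150; 239; 417; 774]; [:: 273; 304; 524; 774];
  [:: 317; 404; 479; 774]; [:: 66; 472; 546; 774]; [:: 94; 393; 493; 774]; [:: 23; 146; 373; 774];
  [:: 54; 95; 311; 777]; [:: 111; 202; 385; 777]; [:: 167; 250; 318; 777]; [:: 337; 405; 420; 777];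
  [:: 234; 395; 521; 777]; [:: 53; 263; 433; 777]; [:: 121; 431; 543; 777]; [:: 52; 147; 520; 777];
  [:: 60; 261; 325; 385]; [:: 7; 163; 283; 518]; [:: 89; 393; 455; 543]; [:: 37; 133; 224; 299];
  [:: 173; 230; 384; 498]; [:: 35; 122; 175; 464]; [:: 64; 148; 271; 330]; [:: 251; 342; 376; 466];
  [:: 46; 76; 154; 474]; [:: 23; 78; 189; 497]; [:: 75; 279; 396; 520]; [:: 72; 391; 445; 548];
  [:: 77; 372; 446; 497]; [:: 27; 264; 386; 525]; [:: 149; 276; 356; 453]; [:: 62; 108; 167; 245];
  [:: 199; 251; 311; 433]; [:: 253; 278; 456; 542]].

Definition base_blocks_231 : seq (seq N) := [::
  [:: 39; 101; 370; 552]; [:: 129; 200; 513; 552]; [:: 157; 226; 356; 552]; [:: 291; 381; 514; 552];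
  [:: 261; 474; 509; 552]; [:: 67; 209; 299; 552]; [:: 85; 301; 479; 552]; [:: 11; 168; 451; 552];
  [:: 65; 90; 351; 555]; [:: 133; 152; 503; 555]; [:: 148; 265; 349; 555]; [:: 324; 350; 501; 555];
  [:: 231; 414; 547; 555]; [:: 30; 221; 281; 555]; [:: 89; 331; 452; 555]; [:: 13; 171; 478; 555];
  [:: 40; 127; 359; 558]; [:: 113; 191; 499; 558]; [:: 202; 220; 396; 558]; [:: 324; 388; 506; 558];
  [:: 267; 420; 498; 558]; [:: 26; 221; 278; 558]; [:: 120; 313; 467; 558]; [:: 54; 153; 415; 558];
  [:: 67; 122; 286; 561]; [:: 81; 150; 245; 561]; [:: 145; 290; 435; 561]; [:: 244; 309; 392; 561];
  [:: 237; 415; 494; 561]; [:: 26; 373; 482; 561]; [:: 100; 345; 492; 561]; [:: 27; 149; 517; 561];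
  [:: 29; 132; 303; 564]; [:: 109; 141; 248; 564]; [:: 157; 325; 469; 564]; [:: 214; 332; 409; 564];
  [:: 264; 422; 531; 564]; [:: 33; 405; 426; 564]; [:: 92; 368; 508; 564]; [:: 46; 167; 509; 564];
  [:: 51; 130; 287; 567]; [:: 86; 186; 272; 567]; [:: 172; 279; 437; 567]; [:: 214; 325; 381; 567];
  [:: 255; 429; 541; 567]; [:: 10; 413; 454; 567]; [:: 90; 397; 521; 567]; [:: 62; 146; 522; 567];
  [:: 30; 84; 384; 570]; [:: 77; 149; 207; 570]; [:: 211; 407; 455; 570]; [:: 199; 286; 382; 570];
  [:: 189; 474; 491; 570]; [:: 44; 291; 430; 570]; [:: 70; 308; 532; 570]; [:: 61; 260; 531; 570];
  [:: 49; 107; 363; 573]; [:: 106; 159; 242; 573]; [:: 246; 347; 448; 573]; [:: 146; 309; 346; 573];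
  [:: 172; 431; 550; 573]; [:: 48; 281; 417; 573]; [:: 111; 307; 513; 573]; [:: 38; 268; 524; 573];
  [:: 29; 70; 381; 576]; [:: 72; 199; 274; 576]; [:: 266; 401; 480; 576]; [:: 144; 302; 361; 576];
  [:: 185; 424; 489; 576]; [:: 16; 307; 434; 576]; [:: 83; 303; 530; 576]; [:: 45; 219; 520; 576];
  [:: 37; 69; 301; 579]; [:: 119; 205; 247; 579]; [:: 225; 335; 519; 579]; [:: 177; 303; 443; 579];
  [:: 197; 385; 547; 579]; [:: 5; 480; 533; 579]; [:: 82; 372; 442; 579]; [:: 48; 266; 374; 579];
  [:: 29; 126; 278; 582]; [:: 101; 175; 210; 582]; [:: 224; 306; 511; 582]; [:: 195; 319; 437; 582];
  [:: 149; 404; 512; 582]; [:: 12; 426; 537; 582]; [:: 100; 406; 415; 582]; [:: 49; 208; 360; 582];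
  [:: 18; 132; 321; 585]; [:: 128; 193; 272; 585]; [:: 271; 295; 491; 585]; [:: 165; 293; 422; 585];
  [:: 200; 375; 486; 585]; [:: 40; 420; 544; 585]; [:: 70; 404; 475; 585]; [:: 56; 258; 400; 585];
  [:: 31; 78; 243; 588]; [:: 109; 158; 327; 588]; [:: 186; 238; 484; 588]; [:: 254; 328; 461; 588];
  [:: 329; 408; 536; 588]; [:: 2; 480; 543; 588]; [:: 110; 368; 433; 588]; [:: 48; 181; 358; 588];
  [:: 18; 78; 274; 591]; [:: 88; 149; 332; 591]; [:: 192; 269; 492; 591]; [:: 228; 330; 452; 591];
  [:: 295; 369; 544; 591]; [:: 13; 474; 536; 591]; [:: 116; 371; 418; 591]; [:: 62; 178; 385; 591];
  [:: 68; 75; 230; 594]; [:: 106; 185; 283; 594]; [:: 195; 234; 518; 594]; [:: 247; 311; 464; 594];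
  [:: 333; 378; 531; 594]; [:: 3; 444; 550; 594]; [:: 119; 365; 415; 594]; [:: 34; 172; 385; 594];
  [:: 39; 124; 255; 597]; [:: 72; 195; 380; 597]; [:: 163; 241; 444; 597]; [:: 266; 283; 375; 597];
  [:: 379; 470; 522; 597]; [:: 10; 314; 481; 597]; [:: 128; 330; 541; 597]; [:: 5; 191; 551; 597];
  [:: 41; 110; 229; 600]; [:: 103; 206; 374; 600]; [:: 147; 272; 471; 600]; [:: 255; 330; 369; 600];
  [:: 385; 452; 506; 600]; [:: 21; 277; 454; 600]; [:: 126; 341; 549; 600]; [:: 7; 139; 526; 600];
  [:: 28; 93; 245; 603]; [:: 122; 145; 410; 603]; [:: 170; 255; 465; 603]; [:: 211; 341; 360; 603];
  [:: 373; 431; 547; 603]; [:: 53; 291; 457; 603]; [:: 97; 331; 503; 603]; [:: 27; 147; 501; 603];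
  [:: 26; 122; 472; 606]; [:: 105; 186; 375; 606]; [:: 184; 264; 420; 606]; [:: 307; 347; 482; 606];
  [:: 236; 394; 488; 606]; [:: 60; 229; 326; 606]; [:: 82; 282; 517; 606]; [:: 4; 200; 492; 606];
  [:: 11; 79; 468; 609]; [:: 104; 199; 358; 609]; [:: 173; 261; 440; 609]; [:: 341; 399; 415; 609];
  [:: 236; 374; 500; 609]; [:: 48; 238; 333; 609]; [:: 90; 298; 493; 609]; [:: 46; 153; 498; 609];
  [:: 38; 111; 464; 612]; [:: 79; 200; 395; 612]; [:: 156; 255; 475; 612]; [:: 294; 397; 414; 612];
  [:: 215; 402; 533; 612]; [:: 57; 232; 298; 612]; [:: 110; 329; 514; 612]; [:: 10; 205; 516; 612];
  [:: 53; 168; 371; 615]; [:: 137; 196; 340; 615]; [:: 257; 287; 378; 615]; [:: 85; 352; 551; 615];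
  [:: 111; 271; 448; 615]; [:: 49; 234; 540; 615]; [:: 170; 447; 529; 615]; [:: 3; 339; 440; 615];
  [:: 59; 157; 384; 618]; [:: 98; 200; 337; 618]; [:: 220; 341; 379; 618]; [:: 82; 368; 497; 618];
  [:: 120; 246; 427; 618]; [:: 55; 263; 516; 618]; [:: 186; 456; 532; 618]; [:: 21; 303; 479; 618];
  [:: 53; 164; 406; 621]; [:: 101; 147; 277; 621]; [:: 243; 314; 398; 621]; [:: 127; 363; 521; 621];
  [:: 120; 218; 439; 621]; [:: 34; 259; 519; 621]; [:: 139; 477; 544; 621]; [:: 48; 318; 479; 621];
  [:: 57; 132; 287; 624]; [:: 100; 238; 444; 624]; [:: 147; 236; 343; 624]; [:: 303; 434; 533; 624];
  [:: 188; 406; 439; 624]; [:: 13; 190; 486; 624]; [:: 77; 408; 499; 624]; [:: 59; 237; 371; 624];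
  [:: 19; 91; 303; 627]; [:: 134; 255; 450; 627]; [:: 156; 232; 335; 627]; [:: 298; 455; 484; 627];
  [:: 200; 378; 415; 627]; [:: 41; 145; 494; 627]; [:: 123; 410; 537; 627]; [:: 6; 221; 352; 627];
  [:: 23; 104; 334; 630]; [:: 87; 209; 462; 630]; [:: 195; 222; 342; 630]; [:: 305; 470; 519; 630];
  [:: 200; 350; 430; 630]; [:: 54; 178; 511; 630]; [:: 127; 400; 536; 630]; [:: 16; 253; 357; 630];
  [:: 24; 116; 317; 633]; [:: 121; 210; 422; 633]; [:: 157; 214; 339; 633]; [:: 277; 346; 459; 633];
  [:: 192; 436; 524; 633]; [:: 29; 203; 407; 633]; [:: 111; 345; 510; 633]; [:: 64; 269; 547; 633];
  [:: 58; 108; 295; 636]; [:: 134; 228; 420; 636]; [:: 152; 262; 305; 636]; [:: 306; 405; 466; 636];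
  [:: 205; 473; 484; 636]; [:: 48; 183; 385; 636]; [:: 73; 377; 500; 636]; [:: 56; 209; 522; 636];
  [:: 59; 94; 282; 639]; [:: 108; 210; 475; 639]; [:: 204; 274; 277; 639]; [:: 281; 374; 419; 639];
  [:: 185; 465; 504; 639]; [:: 49; 163; 411; 639]; [:: 77; 352; 496; 639]; [:: 51; 251; 533; 639];
  [:: 27; 104; 216; 642]; [:: 88; 168; 534; 642]; [:: 179; 253; 311; 642]; [:: 221; 360; 532; 642];
  [:: 339; 439; 530; 642]; [:: 58; 289; 349; 642]; [:: 96; 398; 425; 642]; [:: 62; 139; 417; 642];
  [:: 35; 75; 207; 645]; [:: 134; 138; 510; 645]; [:: 140; 262; 343; 645]; [:: 269; 382; 532; 645];
  [:: 278; 479; 539; 645]; [:: 9; 288; 359; 645]; [:: 85; 381; 480; 645]; [:: 16; 163; 421; 645];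
  [:: 37; 79; 240; 648]; [:: 123; 165; 486; 648]; [:: 161; 253; 315; 648]; [:: 254; 374; 547; 648];
  [:: 319; 453; 521; 648]; [:: 11; 284; 408; 648]; [:: 119; 391; 478; 648]; [:: 3; 151; 437; 648];
  [:: 31; 102; 351; 651]; [:: 74; 244; 283; 651]; [:: 162; 278; 376; 651]; [:: 242; 404; 476; 651];
  [:: 152; 219; 504; 651]; [:: 6; 193; 457; 651]; [:: 97; 429; 485; 651]; [:: 35; 303; 547; 651];
  [:: 47; 85; 377; 654]; [:: 75; 254; 298; 654]; [:: 143; 341; 348; 654]; [:: 237; 412; 466; 654];
  [:: 148; 271; 547; 654]; [:: 25; 138; 441; 654]; [:: 86; 473; 504; 654]; [:: 9; 339; 542; 654];
  [:: 36; 116; 394; 657]; [:: 103; 207; 307; 657]; [:: 154; 326; 392; 657]; [:: 220; 366; 477; 657];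
  [:: 138; 266; 521; 657]; [:: 65; 158; 446; 657]; [:: 93; 475; 493; 657]; [:: 61; 324; 486; 657];
  [:: 62; 113; 394; 660]; [:: 73; 155; 415; 660]; [:: 205; 336; 347; 660]; [:: 241; 351; 414; 660];
  [:: 308; 434; 530; 660]; [:: 21; 263; 298; 660]; [:: 84; 207; 495; 660]; [:: 58; 150; 547; 660];
  [:: 54; 102; 350; 663]; [:: 83; 191; 423; 663]; [:: 184; 290; 375; 663]; [:: 245; 382; 431; 663];
  [:: 316; 430; 515; 663]; [:: 4; 213; 276; 663]; [:: 127; 262; 537; 663]; [:: 20; 156; 520; 663];
  [:: 55; 118; 384; 666]; [:: 78; 167; 464; 666]; [:: 151; 328; 361; 666]; [:: 273; 413; 436; 666];
  [:: 342; 432; 539; 666]; [:: 59; 211; 287; 666]; [:: 137; 221; 516; 666]; [:: 24; 165; 508; 666];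
  [:: 63; 143; 303; 669]; [:: 137; 201; 266; 669]; [:: 261; 281; 346; 669]; [:: 73; 310; 525; 669];
  [:: 123; 351; 420; 669]; [:: 2; 371; 517; 669]; [:: 169; 422; 527; 669]; [:: 16; 226; 463; 669];
  [:: 26; 197; 343; 672]; [:: 74; 165; 263; 672]; [:: 234; 282; 397; 672]; [:: 112; 323; 487; 672];
  [:: 96; 360; 417; 672]; [:: 16; 380; 512; 672]; [:: 187; 479; 549; 672]; [:: 12; 232; 451; 672];
  [:: 10; 155; 344; 675]; [:: 134; 141; 242; 675]; [:: 222; 277; 358; 675]; [:: 112; 306; 545; 675];
  [:: 75; 357; 432; 675]; [:: 54; 359; 516; 675]; [:: 151; 449; 544; 675]; [:: 11; 259; 439; 675];
  [:: 33; 82; 444; 678]; [:: 116; 182; 219; 678]; [:: 272; 318; 466; 678]; [:: 160; 409; 416; 678];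
  [:: 144; 296; 484; 678]; [:: 49; 343; 410; 678]; [:: 96; 381; 483; 678]; [:: 17; 214; 488; 678];
  [:: 16; 94; 439; 681]; [:: 80; 170; 264; 681]; [:: 254; 339; 416; 681]; [:: 157; 365; 429; 681];
  [:: 201; 320; 513; 681]; [:: 41; 310; 345; 681]; [:: 96; 385; 494; 681]; [:: 63; 226; 496; 681];
  [:: 14; 73; 431; 684]; [:: 131; 161; 273; 684]; [:: 245; 333; 480; 684]; [:: 190; 354; 466; 684];
  [:: 147; 341; 551; 684]; [:: 39; 283; 388; 684]; [:: 93; 350; 535; 684]; [:: 55; 253; 489; 684];
  [:: 42; 98; 212; 687]; [:: 91; 168; 365; 687]; [:: 170; 232; 490; 687]; [:: 231; 378; 424; 687];
  [:: 289; 361; 506; 687]; [:: 10; 474; 519; 687]; [:: 123; 276; 464; 687]; [:: 14; 139; 329; 687];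
  [:: 21; 126; 274; 690]; [:: 86; 153; 379; 690]; [:: 191; 246; 497; 690]; [:: 254; 353; 426; 690];
  [:: 308; 351; 489; 690]; [:: 64; 431; 544; 690]; [:: 73; 340; 451; 690]; [:: 29; 193; 288; 690];
  [:: 51; 115; 252; 693]; [:: 87; 147; 408; 693]; [:: 152; 236; 546; 693]; [:: 250; 367; 419; 693];
  [:: 324; 386; 550; 693]; [:: 46; 436; 494; 693]; [:: 110; 320; 414; 693]; [:: 50; 160; 340; 693];
  [:: 7; 147; 345; 696]; [:: 123; 160; 220; 696]; [:: 234; 385; 524; 696]; [:: 110; 307; 404; 696];
  [:: 109; 420; 514; 696]; [:: 24; 311; 489; 696]; [:: 143; 294; 466; 696]; [:: 17; 224; 452; 696];
  [:: 9; 161; 400; 699]; [:: 87; 171; 261; 699]; [:: 209; 380; 528; 699]; [:: 101; 328; 381; 699];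
  [:: 112; 426; 497; 699]; [:: 35; 293; 514; 699]; [:: 190; 339; 469; 699]; [:: 25; 217; 473; 699];
  [:: 23; 154; 386; 702]; [:: 120; 203; 266; 702]; [:: 265; 390; 544; 702]; [:: 92; 343; 352; 702];
  [:: 82; 450; 483; 702]; [:: 1; 299; 512; 702]; [:: 183; 279; 430; 702]; [:: 6; 252; 416; 702];
  [:: 1; 101; 330; 705]; [:: 91; 184; 231; 705]; [:: 226; 322; 354; 705]; [:: 192; 278; 548; 705];
  [:: 191; 397; 432; 705]; [:: 44; 392; 541; 705]; [:: 135; 470; 516; 705]; [:: 51; 218; 427; 705];
  [:: 18; 111; 342; 708]; [:: 134; 170; 216; 708]; [:: 241; 328; 401; 708]; [:: 181; 278; 507; 708];
  [:: 144; 387; 476; 708]; [:: 61; 394; 491; 708]; [:: 109; 439; 529; 708]; [:: 32; 212; 435; 708];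
  [:: 11; 100; 306; 711]; [:: 126; 174; 225; 711]; [:: 238; 316; 379; 711]; [:: 197; 314; 514; 711];
  [:: 178; 401; 427; 711]; [:: 27; 351; 540; 711]; [:: 122; 417; 518; 711]; [:: 34; 215; 419; 711];
  [:: 21; 119; 299; 714]; [:: 103; 199; 543; 714]; [:: 149; 268; 297; 714]; [:: 298; 440; 517; 714];
  [:: 224; 369; 521; 714]; [:: 37; 213; 480; 714]; [:: 105; 388; 448; 714]; [:: 47; 153; 389; 714];
  [:: 6; 108; 287; 717]; [:: 77; 193; 520; 717]; [:: 155; 219; 342; 717]; [:: 295; 432; 515; 717];
  [:: 256; 367; 501; 717]; [:: 64; 224; 424; 717]; [:: 115; 368; 476; 717]; [:: 68; 168; 408; 717];
  [:: 36; 118; 332; 720]; [:: 117; 160; 551; 720]; [:: 173; 218; 312; 720]; [:: 322; 457; 516; 720];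
  [:: 261; 356; 526; 720]; [:: 49; 232; 422; 720]; [:: 116; 384; 465; 720]; [:: 17; 189; 376; 720];
  [:: 48; 91; 271; 723]; [:: 116; 157; 290; 723]; [:: 198; 210; 545; 723]; [:: 245; 312; 401; 723];
  [:: 322; 421; 547; 723]; [:: 65; 364; 501; 723]; [:: 126; 405; 464; 723]; [:: 1; 200; 420; 723];
  [:: 46; 136; 217; 726]; [:: 116; 173; 308; 726]; [:: 187; 258; 526; 726]; [:: 218; 309; 403; 726];
  [:: 298; 477; 543; 726]; [:: 3; 360; 548; 726]; [:: 78; 377; 430; 726]; [:: 2; 153; 470; 726];
  [:: 68; 82; 223; 729]; [:: 77; 201; 302; 729]; [:: 203; 231; 540; 729]; [:: 227; 300; 351; 729];
  [:: 283; 464; 539; 729]; [:: 52; 365; 520; 729]; [:: 102; 397; 453; 729]; [:: 27; 139; 421; 729];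
  [:: 21; 191; 356; 732]; [:: 101; 145; 217; 732]; [:: 209; 375; 492; 732]; [:: 123; 289; 364; 732];
  [:: 85; 478; 506; 732]; [:: 50; 330; 499; 732]; [:: 198; 341; 422; 732]; [:: 31; 264; 453; 732];
  [:: 2; 69; 328; 735]; [:: 89; 157; 223; 735]; [:: 150; 300; 400; 735]; [:: 246; 296; 544; 735];
  [:: 275; 380; 457; 735]; [:: 66; 372; 513; 735]; [:: 76; 453; 527; 735]; [:: 46; 188; 461; 735];
  [:: 3; 111; 292; 738]; [:: 94; 198; 425; 738]; [:: 154; 256; 315; 738]; [:: 278; 462; 496; 738];
  [:: 207; 350; 433; 738]; [:: 11; 266; 525; 738]; [:: 131; 360; 539; 738]; [:: 37; 200; 376; 738];
  [:: 4; 126; 480; 741]; [:: 130; 205; 352; 741]; [:: 140; 311; 415; 741]; [:: 219; 348; 455; 741];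
  [:: 304; 365; 541; 741]; [:: 41; 254; 324; 741]; [:: 122; 271; 548; 741]; [:: 42; 186; 543; 741];
  [:: 64; 110; 361; 744]; [:: 123; 186; 322; 744]; [:: 193; 254; 354; 744]; [:: 278; 389; 487; 744];
  [:: 229; 276; 440; 744]; [:: 41; 267; 539; 744]; [:: 127; 414; 495; 744]; [:: 24; 179; 424; 744];
  [:: 17; 130; 393; 747]; [:: 93; 218; 340; 747]; [:: 158; 271; 367; 747]; [:: 294; 407; 422; 747];
  [:: 156; 329; 541; 747]; [:: 49; 205; 457; 747]; [:: 104; 432; 542; 747]; [:: 54; 219; 549; 747];
  [:: 57; 127; 332; 750]; [:: 99; 161; 261; 750]; [:: 141; 322; 363; 750]; [:: 212; 291; 519; 750];
  [:: 214; 398; 422; 750]; [:: 62; 370; 485; 750]; [:: 137; 471; 532; 750]; [:: 52; 142; 436; 750];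
  [:: 2; 128; 216; 753]; [:: 75; 160; 447; 753]; [:: 194; 262; 354; 753]; [:: 227; 442; 535; 753];
  [:: 288; 406; 437; 753]; [:: 9; 380; 536; 753]; [:: 94; 311; 543; 753]; [:: 40; 174; 283; 753];
  [:: 7; 161; 467; 756]; [:: 81; 190; 224; 756]; [:: 258; 342; 429; 756]; [:: 77; 396; 451; 756];
  [:: 133; 316; 550; 756]; [:: 18; 341; 388; 756]; [:: 171; 353; 512; 756]; [:: 2; 229; 510; 756];
  [:: 7; 106; 278; 759]; [:: 92; 189; 499; 759]; [:: 185; 307; 431; 759]; [:: 263; 300; 536; 759];
  [:: 358; 432; 483; 759]; [:: 15; 211; 427; 759]; [:: 132; 222; 372; 759]; [:: 50; 187; 371; 759];
  [:: 56; 117; 401; 762]; [:: 100; 218; 295; 762]; [:: 180; 303; 373; 762]; [:: 220; 408; 421; 762];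
  [:: 173; 255; 488; 762]; [:: 46; 169; 473; 762]; [:: 137; 459; 528; 762]; [:: 18; 332; 505; 762];
  [:: 42; 79; 224; 765]; [:: 92; 142; 516; 765]; [:: 195; 235; 407; 765]; [:: 216; 308; 512; 765];
  [:: 351; 445; 493; 765]; [:: 17; 325; 373; 765]; [:: 81; 336; 477; 765]; [:: 16; 182; 482; 765];
  [:: 35; 119; 467; 768]; [:: 132; 150; 291; 768]; [:: 188; 408; 459; 768]; [:: 233; 278; 430; 768];
  [:: 328; 410; 502; 768]; [:: 52; 256; 388; 768]; [:: 103; 216; 539; 768]; [:: 21; 199; 528; 768];
  [:: 14; 179; 336; 771]; [:: 78; 148; 253; 771]; [:: 249; 317; 419; 771]; [:: 74; 334; 402; 771];
  [:: 97; 430; 522; 771]; [:: 16; 412; 441; 771]; [:: 174; 398; 512; 771]; [:: 42; 236; 535; 771];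
  [:: 21; 116; 283; 774]; [:: 81; 188; 237; 774]; [:: 156; 296; 346; 774]; [:: 254; 294; 534; 774];
  [:: 262; 395; 423; 774]; [:: 65; 408; 520; 774]; [:: 115; 461; 545; 774]; [:: 19; 148; 439; 774];
  [:: 33; 121; 268; 777]; [:: 135; 180; 342; 777]; [:: 179; 272; 394; 777]; [:: 243; 323; 512; 777];
  [:: 307; 393; 481; 777]; [:: 40; 407; 507; 777]; [:: 77; 416; 505; 777]; [:: 11; 199; 432; 777];
  [:: 10; 84; 396; 780]; [:: 85; 205; 209; 780]; [:: 173; 278; 404; 780]; [:: 273; 385; 507; 780];
  [:: 274; 288; 450; 780]; [:: 60; 277; 529; 780]; [:: 80; 449; 521; 780]; [:: 53; 192; 466; 780];
  [:: 33; 119; 226; 431]; [:: 139; 277; 364; 469]; [:: 58; 124; 149; 308]; [:: 257; 289; 475; 548];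
  [:: 2; 199; 221; 483]; [:: 93; 149; 370; 483]; [:: 219; 288; 411; 473]; [:: 71; 169; 284; 500];
  [:: 77; 246; 390; 489]; [:: 215; 320; 372; 475]; [:: 32; 182; 348; 483]; [:: 12; 103; 288; 482];
  [:: 35; 87; 241; 545]; [:: 36; 179; 351; 419]].

Definition base_blocks_234 : seq (seq N) := [::
  [:: 46; 104; 451; 552]; [:: 79; 146; 222; 552]; [:: 233; 331; 479; 552]; [:: 171; 365; 462; 552];
  [:: 175; 294; 538; 552]; [:: 45; 311; 388; 552]; [:: 129; 390; 551; 552]; [:: 68; 238; 549; 552];
  [:: 23; 122; 439; 555]; [:: 73; 143; 264; 555]; [:: 236; 329; 458; 555]; [:: 171; 385; 456; 555];
  [:: 199; 328; 548; 555]; [:: 49; 279; 393; 555]; [:: 108; 380; 516; 555]; [:: 42; 268; 532; 555];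
  [:: 66; 137; 448; 558]; [:: 112; 170; 207; 558]; [:: 239; 297; 449; 558]; [:: 171; 399; 459; 558];
  [:: 199; 323; 483; 558]; [:: 56; 304; 407; 558]; [:: 81; 352; 505; 558]; [:: 49; 214; 518; 558];
  [:: 27; 134; 318; 561]; [:: 121; 166; 538; 561]; [:: 141; 243; 316; 561]; [:: 338; 376; 497; 561];
  [:: 247; 472; 510; 561]; [:: 28; 242; 356; 561]; [:: 93; 369; 449; 561]; [:: 29; 167; 459; 561];
  [:: 65; 132; 290; 564]; [:: 119; 193; 494; 564]; [:: 195; 208; 303; 564]; [:: 340; 397; 504; 564];
  [:: 230; 456; 484; 564]; [:: 15; 255; 389; 564]; [:: 124; 348; 436; 564]; [:: 4; 146; 461; 564];
  [:: 19; 124; 280; 567]; [:: 102; 151; 483; 567]; [:: 180; 209; 296; 567]; [:: 297; 388; 532; 567];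
  [:: 267; 452; 488; 567]; [:: 53; 265; 389; 567]; [:: 83; 390; 429; 567]; [:: 6; 206; 460; 567];
  [:: 31; 142; 329; 570]; [:: 121; 198; 237; 570]; [:: 233; 303; 356; 570]; [:: 71; 313; 439; 570];
  [:: 132; 376; 550; 570]; [:: 41; 345; 428; 570]; [:: 176; 450; 542; 570]; [:: 21; 208; 528; 570];
  [:: 19; 175; 282; 573]; [:: 96; 198; 251; 573]; [:: 226; 322; 378; 573]; [:: 106; 335; 438; 573];
  [:: 74; 380; 505; 573]; [:: 29; 400; 451; 573]; [:: 206; 467; 542; 573]; [:: 48; 228; 513; 573];
  [:: 49; 145; 280; 576]; [:: 92; 183; 271; 576]; [:: 270; 305; 409; 576]; [:: 120; 312; 446; 576];
  [:: 130; 357; 523; 576]; [:: 20; 347; 414; 576]; [:: 179; 418; 509; 576]; [:: 45; 218; 504; 576];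
  [:: 17; 103; 242; 579]; [:: 105; 167; 284; 579]; [:: 204; 208; 350; 579]; [:: 213; 328; 445; 579];
  [:: 321; 396; 551; 579]; [:: 12; 394; 446; 579]; [:: 104; 432; 496; 579]; [:: 16; 145; 528; 579];
  [:: 29; 135; 224; 582]; [:: 71; 168; 333; 582]; [:: 154; 253; 352; 582]; [:: 210; 344; 468; 582];
  [:: 280; 398; 492; 582]; [:: 39; 405; 418; 582]; [:: 121; 428; 542; 582]; [:: 25; 185; 523; 582];
  [:: 20; 98; 230; 585]; [:: 85; 160; 313; 585]; [:: 200; 217; 402; 585]; [:: 237; 315; 452; 585];
  [:: 335; 406; 529; 585]; [:: 51; 392; 462; 585]; [:: 126; 439; 489; 585]; [:: 25; 195; 545; 585];
  [:: 16; 126; 322; 588]; [:: 133; 142; 225; 588]; [:: 150; 342; 419; 588]; [:: 245; 329; 405; 588];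
  [:: 256; 432; 536; 588]; [:: 17; 376; 454; 588]; [:: 83; 407; 522; 588]; [:: 45; 164; 544; 588];
  [:: 50; 119; 332; 591]; [:: 117; 171; 234; 591]; [:: 191; 340; 470; 591]; [:: 257; 321; 390; 591];
  [:: 241; 465; 490; 591]; [:: 9; 394; 451; 591]; [:: 106; 374; 536; 591]; [:: 67; 184; 504; 591];
  [:: 18; 133; 288; 594]; [:: 95; 143; 267; 594]; [:: 166; 344; 425; 594]; [:: 233; 277; 378; 594];
  [:: 256; 435; 522; 594]; [:: 13; 352; 436; 594]; [:: 87; 362; 520; 594]; [:: 62; 156; 485; 594];
  [:: 0; 108; 386; 597]; [:: 134; 185; 331; 597]; [:: 159; 403; 545; 597]; [:: 263; 293; 357; 597];
  [:: 291; 478; 534; 597]; [:: 4; 207; 544; 597]; [:: 112; 214; 452; 597]; [:: 41; 205; 477; 597];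
  [:: 21; 81; 371; 600]; [:: 137; 201; 287; 600]; [:: 142; 376; 517; 600]; [:: 255; 309; 408; 600];
  [:: 340; 431; 530; 600]; [:: 40; 247; 522; 600]; [:: 124; 209; 426; 600]; [:: 68; 143; 439; 600];
  [:: 63; 126; 383; 603]; [:: 131; 169; 321; 603]; [:: 176; 367; 504; 603]; [:: 214; 277; 369; 603];
  [:: 338; 471; 517; 603]; [:: 34; 239; 539; 603]; [:: 70; 267; 469; 603]; [:: 50; 180; 428; 603];
  [:: 21; 143; 385; 606]; [:: 135; 142; 268; 606]; [:: 260; 296; 348; 606]; [:: 73; 377; 452; 606];
  [:: 95; 327; 495; 606]; [:: 31; 298; 417; 606]; [:: 201; 418; 497; 606]; [:: 20; 216; 529; 606];
  [:: 25; 197; 409; 609]; [:: 73; 160; 269; 609]; [:: 258; 337; 405; 609]; [:: 131; 350; 472; 609];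
  [:: 81; 284; 515; 609]; [:: 20; 342; 437; 609]; [:: 168; 468; 502; 609]; [:: 51; 262; 486; 609];
  [:: 11; 200; 358; 612]; [:: 74; 199; 255; 612]; [:: 271; 339; 351; 612]; [:: 132; 371; 465; 612];
  [:: 109; 292; 538; 612]; [:: 27; 341; 472; 612]; [:: 171; 476; 492; 612]; [:: 40; 218; 497; 612];
  [:: 17; 76; 285; 615]; [:: 75; 220; 360; 615]; [:: 138; 257; 302; 615]; [:: 295; 403; 498; 615];
  [:: 170; 371; 452; 615]; [:: 49; 139; 532; 615]; [:: 122; 471; 536; 615]; [:: 54; 231; 460; 615];
  [:: 57; 104; 314; 618]; [:: 112; 268; 395; 618]; [:: 198; 230; 301; 618]; [:: 291; 354; 532; 618];
  [:: 161; 412; 448; 618]; [:: 5; 190; 494; 618]; [:: 135; 428; 486; 618]; [:: 1; 237; 429; 618];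
  [:: 67; 135; 343; 621]; [:: 128; 259; 388; 621]; [:: 174; 269; 300; 621]; [:: 332; 347; 551; 621];
  [:: 206; 357; 471; 621]; [:: 0; 175; 543; 621]; [:: 76; 481; 529; 621]; [:: 29; 264; 425; 621];
  [:: 63; 98; 257; 624]; [:: 72; 141; 459; 624]; [:: 151; 235; 406; 624]; [:: 243; 323; 461; 624];
  [:: 404; 460; 489; 624]; [:: 59; 295; 411; 624]; [:: 70; 303; 526; 624]; [:: 28; 197; 551; 624];
  [:: 55; 116; 231; 627]; [:: 108; 150; 469; 627]; [:: 178; 212; 371; 627]; [:: 211; 337; 477; 627];
  [:: 411; 470; 490; 627]; [:: 6; 339; 400; 627]; [:: 73; 293; 488; 627]; [:: 26; 173; 504; 627];
  [:: 59; 104; 208; 630]; [:: 99; 195; 419; 630]; [:: 163; 243; 384; 630]; [:: 227; 315; 478; 630];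
  [:: 412; 477; 545; 630]; [:: 34; 341; 395; 630]; [:: 133; 319; 543; 630]; [:: 21; 161; 535; 630];
  [:: 38; 140; 394; 633]; [:: 69; 177; 308; 633]; [:: 263; 288; 399; 633]; [:: 77; 386; 473; 633];
  [:: 85; 222; 544; 633]; [:: 48; 220; 418; 633]; [:: 181; 426; 548; 633]; [:: 49; 292; 537; 633];
  [:: 57; 178; 394; 636]; [:: 136; 188; 313; 636]; [:: 257; 296; 405; 636]; [:: 96; 410; 450; 636];
  [:: 86; 216; 541; 636]; [:: 46; 214; 449; 636]; [:: 183; 418; 485; 636]; [:: 26; 318; 489; 636];
  [:: 67; 180; 376; 639]; [:: 83; 184; 324; 639]; [:: 245; 304; 363; 639]; [:: 85; 377; 424; 639];
  [:: 99; 213; 487; 639]; [:: 68; 274; 414; 639]; [:: 161; 437; 503; 639]; [:: 33; 308; 501; 639];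
  [:: 22; 123; 448; 642]; [:: 107; 199; 387; 642]; [:: 180; 318; 423; 642]; [:: 275; 385; 476; 642];
  [:: 290; 362; 507; 642]; [:: 0; 252; 289; 642]; [:: 88; 253; 526; 642]; [:: 26; 203; 536; 642];
  [:: 54; 119; 414; 645]; [:: 70; 176; 412; 645]; [:: 154; 302; 437; 645]; [:: 224; 410; 451; 645];
  [:: 292; 375; 514; 645]; [:: 23; 213; 342; 645]; [:: 114; 208; 542; 645]; [:: 4; 183; 483; 645];
  [:: 50; 94; 416; 648]; [:: 84; 165; 371; 648]; [:: 158; 292; 460; 648]; [:: 275; 384; 417; 648];
  [:: 309; 355; 506; 648]; [:: 16; 216; 341; 648]; [:: 128; 226; 540; 648]; [:: 27; 172; 523; 648];
  [:: 67; 194; 339; 651]; [:: 83; 168; 245; 651]; [:: 210; 295; 499; 651]; [:: 81; 311; 469; 651];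
  [:: 109; 358; 549; 651]; [:: 8; 476; 527; 651]; [:: 181; 404; 438; 651]; [:: 39; 259; 387; 651];
  [:: 65; 190; 317; 654]; [:: 136; 191; 245; 654]; [:: 261; 336; 522; 654]; [:: 119; 295; 456; 654];
  [:: 135; 350; 551; 654]; [:: 60; 469; 484; 654]; [:: 150; 369; 482; 654]; [:: 10; 214; 391; 654];
  [:: 24; 165; 301; 657]; [:: 111; 190; 257; 657]; [:: 219; 302; 500; 657]; [:: 127; 276; 461; 657];
  [:: 77; 366; 523; 657]; [:: 52; 453; 522; 657]; [:: 161; 391; 460; 657]; [:: 5; 235; 407; 657];
  [:: 34; 124; 387; 660]; [:: 131; 175; 250; 660]; [:: 155; 401; 532; 660]; [:: 219; 281; 370; 660];
  [:: 263; 428; 509; 660]; [:: 27; 331; 504; 660]; [:: 126; 315; 435; 660]; [:: 29; 144; 442; 660];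
  [:: 33; 105; 356; 663]; [:: 100; 159; 223; 663]; [:: 202; 364; 490; 663]; [:: 243; 324; 375; 663];
  [:: 263; 436; 485; 663]; [:: 50; 338; 537; 663]; [:: 98; 286; 482; 663]; [:: 13; 191; 438; 663];
  [:: 59; 134; 388; 666]; [:: 87; 173; 238; 666]; [:: 189; 396; 526; 666]; [:: 255; 295; 392; 666];
  [:: 248; 471; 542; 666]; [:: 34; 321; 528; 666]; [:: 124; 341; 427; 666]; [:: 3; 196; 467; 666];
  [:: 44; 106; 286; 669]; [:: 80; 183; 227; 669]; [:: 182; 303; 462; 669]; [:: 237; 338; 543; 669];
  [:: 271; 393; 470; 669]; [:: 67; 436; 542; 669]; [:: 114; 409; 511; 669]; [:: 27; 178; 365; 669];
  [:: 36; 132; 298; 672]; [:: 76; 156; 271; 672]; [:: 194; 327; 438; 672]; [:: 212; 284; 522; 672];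
  [:: 267; 402; 419; 672]; [:: 47; 457; 500; 672]; [:: 107; 355; 511; 672]; [:: 28; 154; 362; 672];
  [:: 40; 113; 325; 675]; [:: 93; 156; 243; 675]; [:: 194; 288; 420; 675]; [:: 229; 281; 513; 675];
  [:: 236; 357; 431; 675]; [:: 48; 460; 533; 675]; [:: 130; 394; 502; 675]; [:: 14; 175; 374; 675];
  [:: 3; 69; 258; 678]; [:: 71; 153; 392; 678]; [:: 179; 257; 419; 678]; [:: 274; 379; 497; 678];
  [:: 324; 384; 430; 678]; [:: 16; 459; 492; 678]; [:: 106; 293; 484; 678]; [:: 5; 202; 283; 678];
  [:: 27; 118; 270; 681]; [:: 108; 174; 366; 681]; [:: 158; 254; 424; 681]; [:: 211; 392; 512; 681];
  [:: 316; 352; 414; 681]; [:: 52; 416; 504; 681]; [:: 98; 297; 493; 681]; [:: 44; 199; 284; 681];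
  [:: 3; 77; 225; 684]; [:: 106; 177; 349; 684]; [:: 161; 233; 423; 684]; [:: 220; 393; 491; 684];
  [:: 323; 371; 425; 684]; [:: 67; 457; 498; 684]; [:: 135; 280; 514; 684]; [:: 29; 166; 324; 684];
  [:: 60; 114; 415; 687]; [:: 110; 215; 332; 687]; [:: 153; 223; 480; 687]; [:: 306; 361; 416; 687];
  [:: 140; 313; 522; 687]; [:: 16; 139; 411; 687]; [:: 85; 383; 496; 687]; [:: 35; 216; 515; 687];
  [:: 52; 108; 450; 690]; [:: 104; 272; 315; 690]; [:: 197; 220; 461; 690]; [:: 283; 363; 475; 690];
  [:: 172; 341; 488; 690]; [:: 41; 174; 398; 690]; [:: 106; 373; 525; 690]; [:: 60; 222; 499; 690];
  [:: 53; 87; 446; 693]; [:: 128; 239; 280; 693]; [:: 187; 247; 460; 693]; [:: 332; 398; 474; 693];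
  [:: 171; 315; 493; 693]; [:: 45; 149; 394; 693]; [:: 82; 384; 518; 693]; [:: 4; 231; 501; 693];
  [:: 3; 129; 270; 696]; [:: 74; 169; 516; 696]; [:: 140; 260; 277; 696]; [:: 229; 432; 491; 696];
  [:: 299; 393; 520; 696]; [:: 65; 312; 440; 696]; [:: 133; 361; 424; 696]; [:: 34; 192; 389; 696];
  [:: 23; 115; 222; 699]; [:: 75; 174; 500; 699]; [:: 187; 215; 292; 699]; [:: 223; 475; 535; 699];
  [:: 296; 366; 546; 699]; [:: 49; 318; 480; 699]; [:: 77; 412; 443; 699]; [:: 15; 182; 350; 699];
  [:: 25; 107; 207; 702]; [:: 82; 155; 547; 702]; [:: 153; 215; 334; 702]; [:: 259; 440; 495; 702];
  [:: 290; 369; 542; 702]; [:: 66; 324; 463; 702]; [:: 111; 367; 468; 702]; [:: 32; 166; 395; 702];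
  [:: 4; 126; 376; 705]; [:: 112; 225; 441; 705]; [:: 143; 236; 347; 705]; [:: 322; 366; 458; 705];
  [:: 181; 433; 526; 705]; [:: 66; 198; 320; 705]; [:: 74; 312; 500; 705]; [:: 38; 271; 498; 705];
  [:: 54; 72; 353; 708]; [:: 124; 273; 469; 708]; [:: 177; 212; 366; 708]; [:: 299; 385; 414; 708];
  [:: 194; 449; 512; 708]; [:: 38; 145; 324; 708]; [:: 95; 295; 549; 708]; [:: 1; 262; 502; 708];
  [:: 59; 111; 357; 711]; [:: 100; 240; 452; 711]; [:: 184; 275; 364; 711]; [:: 288; 350; 439; 711];
  [:: 195; 465; 486; 711]; [:: 7; 161; 322; 711]; [:: 119; 320; 502; 711]; [:: 30; 232; 548; 711];
  [:: 38; 69; 368; 714]; [:: 79; 179; 326; 714]; [:: 249; 291; 379; 714]; [:: 166; 345; 485; 714];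
  [:: 165; 259; 443; 714]; [:: 48; 236; 534; 714]; [:: 80; 424; 550; 714]; [:: 67; 301; 474; 714];
  [:: 17; 93; 379; 717]; [:: 103; 186; 277; 717]; [:: 232; 335; 393; 717]; [:: 155; 377; 496; 717];
  [:: 187; 245; 481; 717]; [:: 0; 258; 527; 717]; [:: 107; 438; 516; 717]; [:: 43; 327; 470; 717];
  [:: 44; 132; 402; 720]; [:: 109; 202; 303; 720]; [:: 272; 295; 368; 720]; [:: 204; 388; 531; 720];
  [:: 176; 261; 465; 720]; [:: 39; 247; 523; 720]; [:: 89; 452; 524; 720]; [:: 37; 296; 421; 720];
  [:: 10; 122; 264; 723]; [:: 102; 149; 501; 723]; [:: 193; 224; 374; 723]; [:: 253; 314; 550; 723];
  [:: 411; 448; 488; 723]; [:: 66; 276; 388; 723]; [:: 73; 304; 426; 723]; [:: 32; 150; 434; 723];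
  [:: 56; 104; 210; 726]; [:: 123; 148; 512; 726]; [:: 180; 254; 354; 726]; [:: 232; 301; 540; 726];
  [:: 397; 458; 535; 726]; [:: 13; 323; 413; 726]; [:: 70; 330; 439; 726]; [:: 66; 149; 474; 726];
  [:: 60; 137; 273; 729]; [:: 135; 138; 493; 729]; [:: 176; 212; 394; 729]; [:: 232; 285; 491; 729];
  [:: 389; 453; 549; 729]; [:: 8; 304; 378; 729]; [:: 100; 344; 458; 729]; [:: 16; 199; 436; 729];
  [:: 18; 97; 432; 732]; [:: 90; 194; 215; 732]; [:: 241; 308; 415; 732]; [:: 168; 403; 419; 732];
  [:: 172; 286; 512; 732]; [:: 58; 297; 390; 732]; [:: 137; 347; 517; 732]; [:: 59; 234; 501; 732];
  [:: 29; 109; 280; 735]; [:: 75; 190; 538; 735]; [:: 167; 297; 384; 735]; [:: 256; 278; 489; 735];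
  [:: 347; 442; 494; 735]; [:: 54; 245; 364; 735]; [:: 113; 210; 429; 735]; [:: 52; 198; 473; 735];
  [:: 19; 102; 220; 738]; [:: 86; 143; 368; 738]; [:: 190; 251; 529; 738]; [:: 210; 376; 418; 738];
  [:: 296; 396; 545; 738]; [:: 66; 446; 522; 738]; [:: 70; 277; 447; 738]; [:: 32; 171; 333; 738];
  [:: 35; 130; 259; 741]; [:: 110; 200; 477; 741]; [:: 183; 251; 508; 741]; [:: 213; 402; 460; 741];
  [:: 300; 449; 510; 741]; [:: 3; 380; 539; 741]; [:: 135; 340; 367; 741]; [:: 49; 142; 293; 741];
  [:: 25; 80; 296; 744]; [:: 96; 201; 406; 744]; [:: 187; 225; 307; 744]; [:: 324; 353; 532; 744];
  [:: 217; 411; 477; 744]; [:: 42; 221; 503; 744]; [:: 136; 460; 534; 744]; [:: 14; 167; 464; 744];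
  [:: 42; 127; 325; 747]; [:: 119; 180; 470; 747]; [:: 182; 224; 314; 747]; [:: 291; 393; 472; 747];
  [:: 214; 414; 497; 747]; [:: 41; 258; 359; 747]; [:: 135; 397; 511; 747]; [:: 16; 184; 519; 747];
  [:: 12; 131; 277; 750]; [:: 84; 173; 222; 750]; [:: 223; 278; 443; 750]; [:: 195; 285; 395; 750];
  [:: 166; 477; 524; 750]; [:: 11; 376; 472; 750]; [:: 82; 393; 489; 750]; [:: 40; 269; 487; 750];
  [:: 52; 101; 307; 753]; [:: 76; 144; 451; 753]; [:: 172; 287; 548; 753]; [:: 244; 282; 438; 753];
  [:: 365; 464; 550; 753]; [:: 59; 275; 525; 753]; [:: 78; 231; 406; 753]; [:: 3; 146; 357; 753];
  [:: 12; 101; 286; 756]; [:: 76; 198; 210; 756]; [:: 227; 324; 432; 756]; [:: 202; 299; 512; 756];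
  [:: 158; 371; 439; 756]; [:: 44; 476; 546; 756]; [:: 126; 360; 529; 756]; [:: 46; 274; 367; 756];
  [:: 28; 109; 374; 759]; [:: 84; 149; 228; 759]; [:: 162; 303; 388; 759]; [:: 238; 381; 493; 759];
  [:: 236; 310; 476; 759]; [:: 33; 314; 528; 759]; [:: 95; 438; 518; 759]; [:: 8; 157; 460; 759];
  [:: 47; 71; 344; 762]; [:: 115; 203; 223; 762]; [:: 275; 324; 481; 762]; [:: 186; 343; 369; 762];
  [:: 184; 444; 545; 762]; [:: 21; 404; 425; 762]; [:: 72; 394; 523; 762]; [:: 28; 249; 483; 762];
  [:: 18; 120; 411; 765]; [:: 100; 160; 302; 765]; [:: 180; 239; 370; 765]; [:: 318; 383; 431; 765];
  [:: 250; 301; 488; 765]; [:: 62; 255; 462; 765]; [:: 86; 460; 499; 765]; [:: 10; 158; 501; 765];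
  [:: 25; 123; 318; 768]; [:: 86; 256; 436; 768]; [:: 194; 260; 307; 768]; [:: 332; 477; 490; 768];
  [:: 172; 367; 440; 768]; [:: 11; 168; 483; 768]; [:: 85; 359; 545; 768]; [:: 21; 240; 396; 768];
  [:: 16; 113; 248; 771]; [:: 133; 173; 535; 771]; [:: 205; 274; 369; 771]; [:: 228; 456; 500; 771];
  [:: 281; 359; 483; 771]; [:: 60; 400; 449; 771]; [:: 123; 280; 427; 771]; [:: 5; 186; 285; 771];
  [:: 6; 90; 324; 774]; [:: 79; 191; 444; 774]; [:: 159; 302; 503; 774]; [:: 218; 307; 451; 774];
  [:: 368; 440; 540; 774]; [:: 11; 226; 484; 774]; [:: 107; 228; 354; 774]; [:: 1; 175; 346; 774];
  [:: 44; 69; 363; 777]; [:: 83; 181; 320; 777]; [:: 138; 255; 370; 777]; [:: 325; 362; 466; 777];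
  [:: 227; 303; 487; 777]; [:: 36; 220; 482; 777]; [:: 76; 459; 513; 777]; [:: 19; 155; 536; 777];
  [:: 64; 106; 375; 780]; [:: 87; 206; 247; 780]; [:: 261; 407; 513; 780]; [:: 171; 342; 409; 780];
  [:: 151; 418; 529; 780]; [:: 62; 335; 524; 780]; [:: 128; 295; 449; 780]; [:: 60; 257; 432; 780];
  [:: 16; 166; 476; 783]; [:: 76; 186; 233; 783]; [:: 243; 387; 480; 783]; [:: 95; 318; 418; 783];
  [:: 102; 379; 507; 783]; [:: 35; 295; 377; 783]; [:: 158; 314; 514; 783]; [:: 57; 226; 521; 783];
  [:: 7; 173; 216; 383]; [:: 180; 251; 389; 539]; [:: 5; 114; 295; 520]; [:: 123; 247; 354; 461];
  [:: 48; 112; 348; 467]; [:: 138; 335; 385; 484]; [:: 27; 78; 162; 329]; [:: 260; 293; 446; 508];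
  [:: 34; 104; 452; 547]; [:: 168; 213; 279; 469]].

Definition base_blocks_237 : seq (seq N) := [::
  [:: 43; 100; 243; 552]; [:: 135; 148; 322; 552]; [:: 204; 221; 500; 552]; [:: 211; 276; 427; 552];
  [:: 338; 373; 519; 552]; [:: 66; 458; 514; 552]; [:: 80; 347; 471; 552]; [:: 29; 185; 387; 552];
  [:: 12; 85; 248; 555]; [:: 78; 206; 276; 555]; [:: 190; 244; 550; 555]; [:: 222; 338; 456; 555];
  [:: 280; 389; 503; 555]; [:: 68; 469; 501; 555]; [:: 119; 345; 443; 555]; [:: 22; 183; 346; 555];
  [:: 23; 70; 214; 558]; [:: 129; 138; 302; 558]; [:: 206; 255; 489; 558]; [:: 218; 325; 467; 558];
  [:: 327; 399; 535; 558]; [:: 46; 468; 518; 558]; [:: 80; 346; 466; 558]; [:: 51; 154; 371; 558];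
  [:: 56; 116; 363; 561]; [:: 105; 199; 237; 561]; [:: 138; 281; 407; 561]; [:: 266; 364; 496; 561];
  [:: 244; 324; 476; 561]; [:: 25; 280; 506; 561]; [:: 106; 457; 498; 561]; [:: 21; 164; 465; 561];
  [:: 10; 90; 361; 564]; [:: 70; 160; 275; 564]; [:: 147; 315; 399; 564]; [:: 211; 353; 538; 564];
  [:: 267; 319; 448; 564]; [:: 54; 281; 536; 564]; [:: 71; 429; 525; 564]; [:: 53; 161; 458; 564];
  [:: 45; 127; 371; 567]; [:: 110; 196; 265; 567]; [:: 150; 334; 361; 567]; [:: 246; 378; 532; 567];
  [:: 239; 302; 438; 567]; [:: 56; 303; 494; 567]; [:: 84; 443; 519; 567]; [:: 4; 158; 427; 567];
  [:: 61; 135; 301; 570]; [:: 127; 266; 436; 570]; [:: 195; 271; 288; 570]; [:: 290; 429; 521; 570];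
  [:: 154; 357; 443; 570]; [:: 39; 155; 532; 570]; [:: 98; 395; 504; 570]; [:: 17; 237; 373; 570];
  [:: 13; 72; 324; 573]; [:: 130; 271; 469; 573]; [:: 156; 261; 296; 573]; [:: 301; 438; 543; 573];
  [:: 172; 373; 452; 573]; [:: 9; 167; 545; 573]; [:: 122; 399; 523; 573]; [:: 65; 218; 398; 573];
  [:: 55; 126; 329; 576]; [:: 73; 261; 469; 576]; [:: 153; 218; 313; 576]; [:: 300; 465; 544; 576];
  [:: 172; 413; 434; 576]; [:: 24; 194; 522; 576]; [:: 122; 394; 509; 576]; [:: 62; 274; 384; 576];
  [:: 41; 85; 480; 579]; [:: 114; 179; 238; 579]; [:: 183; 318; 425; 579]; [:: 263; 411; 442; 579];
  [:: 210; 295; 519; 579]; [:: 28; 317; 355; 579]; [:: 107; 377; 496; 579]; [:: 21; 145; 524; 579];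
  [:: 32; 110; 431; 582]; [:: 76; 202; 265; 582]; [:: 161; 283; 457; 582]; [:: 227; 379; 471; 582];
  [:: 270; 278; 491; 582]; [:: 58; 294; 392; 582]; [:: 108; 354; 546; 582]; [:: 54; 186; 511; 582];
  [:: 44; 114; 424; 585]; [:: 125; 162; 274; 585]; [:: 172; 308; 432; 585]; [:: 248; 350; 416; 585];
  [:: 246; 306; 517; 585]; [:: 10; 331; 387; 585]; [:: 121; 397; 545; 585]; [:: 24; 155; 498; 585];
  [:: 20; 99; 338; 588]; [:: 98; 154; 275; 588]; [:: 159; 334; 466; 588]; [:: 235; 276; 496; 588];
  [:: 240; 391; 462; 588]; [:: 46; 422; 525; 588]; [:: 106; 399; 500; 588]; [:: 12; 158; 371; 588];
  [:: 60; 106; 283; 591]; [:: 129; 205; 220; 591]; [:: 180; 300; 475; 591]; [:: 225; 323; 521; 591];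
  [:: 209; 354; 447; 591]; [:: 8; 419; 532; 591]; [:: 131; 410; 483; 591]; [:: 64; 155; 409; 591];
  [:: 43; 134; 276; 594]; [:: 130; 205; 267; 594]; [:: 189; 320; 454; 594]; [:: 218; 286; 543; 594];
  [:: 235; 392; 441; 594]; [:: 15; 458; 521; 594]; [:: 123; 412; 484; 594]; [:: 50; 167; 393; 594];
  [:: 12; 133; 288; 597]; [:: 117; 178; 544; 597]; [:: 165; 316; 431; 597]; [:: 271; 320; 503; 597];
  [:: 373; 454; 549; 597]; [:: 2; 221; 480; 597]; [:: 119; 261; 350; 597]; [:: 61; 206; 357; 597];
  [:: 23; 81; 343; 600]; [:: 134; 148; 504; 600]; [:: 201; 329; 474; 600]; [:: 259; 279; 511; 600];
  [:: 392; 464; 551; 600]; [:: 16; 257; 454; 600]; [:: 136; 219; 378; 600]; [:: 15; 191; 361; 600];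
  [:: 7; 119; 314; 603]; [:: 118; 142; 518; 603]; [:: 144; 327; 421; 603]; [:: 259; 289; 492; 603];
  [:: 384; 462; 487; 603]; [:: 30; 218; 476; 603]; [:: 132; 237; 349; 603]; [:: 41; 176; 350; 603];
  [:: 49; 134; 288; 606]; [:: 100; 187; 541; 606]; [:: 206; 272; 281; 606]; [:: 304; 358; 498; 606];
  [:: 247; 430; 512; 606]; [:: 62; 273; 365; 606]; [:: 132; 381; 416; 606]; [:: 3; 165; 456; 606];
  [:: 62; 85; 310; 609]; [:: 102; 162; 483; 609]; [:: 175; 216; 324; 609]; [:: 308; 372; 509; 609];
  [:: 272; 426; 532; 609]; [:: 3; 262; 358; 609]; [:: 74; 347; 430; 609]; [:: 37; 164; 470; 609];
  [:: 3; 105; 290; 612]; [:: 134; 197; 497; 612]; [:: 186; 226; 319; 612]; [:: 336; 380; 538; 612];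
  [:: 237; 482; 486; 612]; [:: 25; 263; 348; 612]; [:: 127; 367; 429; 612]; [:: 47; 172; 454; 612];
  [:: 4; 167; 277; 615]; [:: 134; 196; 268; 615]; [:: 270; 284; 415; 615]; [:: 85; 333; 409; 615];
  [:: 81; 480; 549; 615]; [:: 21; 381; 434; 615]; [:: 201; 368; 493; 615]; [:: 56; 215; 497; 615];
  [:: 8; 174; 306; 618]; [:: 122; 188; 236; 618]; [:: 241; 331; 459; 618]; [:: 112; 326; 375; 618];
  [:: 87; 476; 531; 618]; [:: 55; 407; 415; 618]; [:: 193; 370; 505; 618]; [:: 18; 231; 512; 618];
  [:: 57; 157; 338; 621]; [:: 89; 186; 243; 621]; [:: 224; 303; 464; 621]; [:: 118; 340; 353; 621];
  [:: 96; 439; 510; 621]; [:: 41; 382; 423; 621]; [:: 179; 408; 547; 621]; [:: 46; 238; 533; 621];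
  [:: 13; 120; 217; 624]; [:: 118; 156; 347; 624]; [:: 190; 264; 532; 624]; [:: 251; 332; 378; 624];
  [:: 388; 422; 537; 624]; [:: 9; 286; 542; 624]; [:: 107; 279; 447; 624]; [:: 68; 146; 463; 624];
  [:: 40; 130; 236; 627]; [:: 113; 201; 374; 627]; [:: 172; 217; 531; 627]; [:: 216; 310; 363; 627];
  [:: 364; 458; 551; 627]; [:: 9; 276; 505; 627]; [:: 126; 302; 468; 627]; [:: 38; 164; 442; 627];
  [:: 34; 89; 273; 630]; [:: 102; 138; 362; 630]; [:: 160; 245; 515; 630]; [:: 214; 315; 354; 630];
  [:: 400; 464; 526; 630]; [:: 66; 281; 516; 630]; [:: 94; 307; 471; 630]; [:: 11; 194; 430; 630];
  [:: 1; 180; 399; 633]; [:: 83; 194; 273; 633]; [:: 254; 385; 454; 633]; [:: 81; 341; 359; 633];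
  [:: 70; 443; 551; 633]; [:: 23; 309; 426; 633]; [:: 187; 340; 532; 633]; [:: 48; 226; 504; 633];
  [:: 13; 162; 370; 636]; [:: 108; 185; 246; 636]; [:: 227; 404; 446; 636]; [:: 97; 341; 372; 636];
  [:: 77; 453; 543; 636]; [:: 29; 339; 418; 636]; [:: 157; 286; 539; 636]; [:: 21; 253; 541; 636];
  [:: 16; 144; 365; 639]; [:: 76; 185; 207; 639]; [:: 257; 381; 417; 639]; [:: 128; 335; 385; 639];
  [:: 135; 463; 544; 639]; [:: 44; 297; 416; 639]; [:: 193; 310; 543; 639]; [:: 60; 208; 536; 639];
  [:: 26; 93; 255; 642]; [:: 89; 202; 452; 642]; [:: 150; 238; 338; 642]; [:: 230; 466; 538; 642];
  [:: 337; 362; 414; 642]; [:: 40; 330; 530; 642]; [:: 118; 408; 492; 642]; [:: 33; 146; 394; 642];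
  [:: 37; 130; 211; 645]; [:: 108; 149; 477; 645]; [:: 154; 257; 312; 645]; [:: 219; 452; 504; 645];
  [:: 338; 360; 442; 645]; [:: 60; 286; 505; 645]; [:: 98; 382; 503; 645]; [:: 23; 171; 404; 645];
  [:: 42; 128; 227; 648]; [:: 73; 189; 475; 648]; [:: 152; 234; 298; 648]; [:: 211; 441; 518; 648];
  [:: 306; 403; 473; 648]; [:: 50; 329; 519; 648]; [:: 129; 347; 547; 648]; [:: 28; 181; 411; 648];
  [:: 48; 82; 446; 651]; [:: 69; 205; 217; 651]; [:: 213; 402; 448; 651]; [:: 186; 290; 417; 651];
  [:: 176; 347; 503; 651]; [:: 7; 300; 406; 651]; [:: 89; 283; 531; 651]; [:: 26; 212; 517; 651];
  [:: 11; 94; 431; 654]; [:: 99; 194; 252; 654]; [:: 218; 380; 427; 654]; [:: 142; 337; 450; 654];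
  [:: 201; 397; 499; 654]; [:: 15; 293; 351; 654]; [:: 128; 285; 539; 654]; [:: 40; 247; 513; 654];
  [:: 40; 85; 467; 657]; [:: 72; 174; 230; 657]; [:: 238; 355; 451; 657]; [:: 167; 339; 477; 657];
  [:: 172; 381; 492; 657]; [:: 38; 337; 356; 657]; [:: 134; 320; 547; 657]; [:: 57; 246; 503; 657];
  [:: 39; 175; 402; 660]; [:: 74; 146; 266; 660]; [:: 229; 283; 413; 660]; [:: 79; 385; 515; 660];
  [:: 120; 317; 472; 660]; [:: 22; 276; 514; 660]; [:: 153; 446; 510; 660]; [:: 5; 273; 459; 660];
  [:: 18; 189; 365; 663]; [:: 107; 199; 220; 663]; [:: 216; 321; 394; 663]; [:: 70; 351; 489; 663];
  [:: 135; 316; 473; 663]; [:: 10; 329; 518; 663]; [:: 161; 465; 484; 663]; [:: 44; 239; 460; 663];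
  [:: 45; 200; 346; 666]; [:: 83; 156; 264; 666]; [:: 248; 281; 351; 666]; [:: 85; 350; 493; 666];
  [:: 78; 312; 414; 666]; [:: 16; 277; 486; 666]; [:: 157; 445; 488; 666]; [:: 47; 253; 473; 666];
  [:: 27; 127; 433; 669]; [:: 110; 174; 339; 669]; [:: 155; 261; 476; 669]; [:: 301; 363; 417; 669];
  [:: 271; 311; 485; 669]; [:: 8; 260; 394; 669]; [:: 102; 404; 492; 669]; [:: 37; 202; 538; 669];
  [:: 31; 85; 473; 672]; [:: 101; 151; 338; 672]; [:: 159; 234; 462; 672]; [:: 285; 368; 475; 672];
  [:: 241; 292; 541; 672]; [:: 63; 272; 378; 672]; [:: 96; 379; 506; 672]; [:: 35; 146; 519; 672];
  [:: 56; 112; 477; 675]; [:: 71; 155; 289; 675]; [:: 169; 216; 478; 675]; [:: 299; 364; 452; 675];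
  [:: 274; 318; 546; 675]; [:: 19; 269; 392; 675]; [:: 72; 354; 505; 675]; [:: 45; 168; 506; 675];
  [:: 64; 99; 406; 678]; [:: 74; 198; 343; 678]; [:: 221; 291; 354; 678]; [:: 197; 392; 526; 678];
  [:: 184; 264; 442; 678]; [:: 48; 253; 537; 678]; [:: 94; 477; 497; 678]; [:: 53; 296; 455; 678];
  [:: 46; 108; 356; 681]; [:: 86; 139; 291; 681]; [:: 264; 338; 361; 681]; [:: 162; 348; 525; 681];
  [:: 197; 274; 481; 681]; [:: 33; 263; 530; 681]; [:: 82; 480; 502; 681]; [:: 8; 340; 425; 681];
  [:: 67; 87; 351; 684]; [:: 134; 146; 296; 684]; [:: 274; 292; 404; 684]; [:: 202; 355; 518; 684];
  [:: 162; 215; 478; 684]; [:: 66; 207; 520; 684]; [:: 109; 414; 489; 684]; [:: 38; 297; 446; 684];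
  [:: 6; 115; 231; 687]; [:: 92; 160; 354; 687]; [:: 156; 223; 294; 687]; [:: 242; 377; 505; 687];
  [:: 322; 391; 478; 687]; [:: 29; 332; 509; 687]; [:: 120; 465; 522; 687]; [:: 34; 191; 446; 687];
  [:: 61; 102; 263; 690]; [:: 100; 199; 353; 690]; [:: 159; 255; 322; 690]; [:: 271; 352; 521; 690];
  [:: 302; 369; 449; 690]; [:: 15; 330; 486; 690]; [:: 107; 418; 538; 690]; [:: 62; 143; 480; 690];
  [:: 41; 92; 259; 693]; [:: 84; 205; 409; 693]; [:: 198; 269; 296; 693]; [:: 213; 381; 525; 693];
  [:: 315; 347; 477; 693]; [:: 4; 331; 526; 693]; [:: 70; 470; 515; 693]; [:: 9; 143; 457; 693];
  [:: 28; 93; 210; 696]; [:: 70; 150; 375; 696]; [:: 145; 274; 528; 696]; [:: 266; 380; 423; 696];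
  [:: 309; 394; 506; 696]; [:: 6; 458; 505; 696]; [:: 71; 329; 418; 696]; [:: 17; 206; 292; 696];
  [:: 62; 81; 226; 699]; [:: 109; 143; 401; 699]; [:: 204; 227; 519; 699]; [:: 252; 412; 456; 699];
  [:: 312; 363; 542; 699]; [:: 10; 440; 493; 699]; [:: 134; 293; 415; 699]; [:: 42; 151; 343; 699];
  [:: 9; 78; 224; 702]; [:: 73; 196; 364; 702]; [:: 170; 267; 489; 702]; [:: 211; 402; 462; 702];
  [:: 309; 398; 515; 702]; [:: 68; 434; 520; 702]; [:: 71; 281; 475; 702]; [:: 61; 198; 283; 702];
  [:: 5; 113; 371; 705]; [:: 117; 243; 319; 705]; [:: 183; 233; 358; 705]; [:: 315; 408; 423; 705];
  [:: 187; 329; 545; 705]; [:: 39; 143; 463; 705]; [:: 103; 470; 528; 705]; [:: 46; 217; 541; 705];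
  [:: 3; 99; 353; 708]; [:: 97; 273; 301; 708]; [:: 141; 224; 388; 708]; [:: 321; 399; 462; 708];
  [:: 160; 281; 522; 708]; [:: 1; 140; 463; 708]; [:: 101; 467; 496; 708]; [:: 50; 271; 512; 708];
  [:: 1; 82; 410; 711]; [:: 104; 213; 286; 711]; [:: 198; 230; 385; 711]; [:: 306; 372; 417; 711];
  [:: 187; 317; 538; 711]; [:: 35; 173; 460; 711]; [:: 87; 428; 494; 711]; [:: 63; 220; 531; 711];
  [:: 37; 86; 473; 714]; [:: 130; 173; 310; 714]; [:: 163; 356; 465; 714]; [:: 217; 320; 460; 714];
  [:: 336; 388; 501; 714]; [:: 51; 267; 351; 714]; [:: 108; 233; 506; 714]; [:: 65; 147; 484; 714];
  [:: 36; 133; 426; 717]; [:: 93; 141; 289; 717]; [:: 146; 405; 421; 717]; [:: 211; 323; 467; 717];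
  [:: 339; 350; 517; 717]; [:: 20; 213; 352; 717]; [:: 71; 230; 519; 717]; [:: 34; 178; 500; 717];
  [:: 35; 111; 445; 720]; [:: 113; 142; 319; 720]; [:: 177; 358; 434; 720]; [:: 214; 296; 426; 720];
  [:: 285; 402; 524; 720]; [:: 16; 219; 401; 720]; [:: 106; 263; 532; 720]; [:: 15; 206; 501; 720];
  [:: 5; 89; 277; 723]; [:: 87; 145; 457; 723]; [:: 170; 294; 384; 723]; [:: 233; 302; 474; 723];
  [:: 377; 434; 541; 723]; [:: 66; 211; 385; 723]; [:: 79; 207; 483; 723]; [:: 64; 162; 506; 723];
  [:: 45; 75; 305; 726]; [:: 100; 196; 481; 726]; [:: 194; 307; 382; 726]; [:: 232; 288; 423; 726];
  [:: 378; 434; 538; 726]; [:: 67; 264; 380; 726]; [:: 113; 224; 504; 726]; [:: 53; 195; 497; 726];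
  [:: 13; 130; 339; 729]; [:: 107; 181; 475; 729]; [:: 149; 296; 377; 729]; [:: 249; 295; 474; 729];
  [:: 346; 452; 511; 729]; [:: 56; 218; 387; 729]; [:: 78; 247; 495; 729]; [:: 66; 171; 497; 729];
  [:: 49; 201; 411; 732]; [:: 74; 178; 289; 732]; [:: 260; 321; 398; 732]; [:: 90; 358; 447; 732];
  [:: 88; 261; 525; 732]; [:: 48; 223; 434; 732]; [:: 164; 454; 496; 732]; [:: 44; 338; 548; 732];
  [:: 39; 103; 324; 735]; [:: 90; 160; 482; 735]; [:: 188; 212; 304; 735]; [:: 308; 376; 478; 735];
  [:: 220; 477; 542; 735]; [:: 55; 231; 357; 735]; [:: 137; 380; 484; 735]; [:: 17; 192; 495; 735];
  [:: 38; 101; 386; 738]; [:: 106; 152; 246; 738]; [:: 220; 393; 451; 738]; [:: 162; 287; 397; 738];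
  [:: 178; 477; 531; 738]; [:: 60; 328; 428; 738]; [:: 84; 285; 536; 738]; [:: 37; 272; 496; 738];
  [:: 10; 76; 345; 741]; [:: 77; 212; 296; 741]; [:: 146; 312; 407; 741]; [:: 235; 391; 419; 741];
  [:: 148; 237; 488; 741]; [:: 65; 183; 453; 741]; [:: 87; 433; 516; 741]; [:: 33; 304; 508; 741];
  [:: 63; 131; 298; 744]; [:: 136; 156; 269; 744]; [:: 250; 341; 371; 744]; [:: 182; 282; 499; 744];
  [:: 181; 387; 455; 744]; [:: 5; 349; 510; 744]; [:: 78; 432; 506; 744]; [:: 7; 255; 457; 744];
  [:: 28; 157; 395; 747]; [:: 91; 191; 261; 747]; [:: 262; 328; 399; 747]; [:: 134; 385; 518; 747];
  [:: 108; 282; 463; 747]; [:: 56; 284; 496; 747]; [:: 156; 417; 495; 747]; [:: 33; 260; 461; 747];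
  [:: 45; 70; 350; 750]; [:: 81; 253; 298; 750]; [:: 179; 288; 391; 750]; [:: 219; 360; 535; 750];
  [:: 198; 266; 469; 750]; [:: 56; 151; 521; 750]; [:: 107; 456; 489; 750]; [:: 55; 320; 446; 750];
  [:: 12; 131; 261; 753]; [:: 72; 163; 537; 753]; [:: 150; 254; 307; 753]; [:: 259; 405; 488; 753];
  [:: 281; 459; 499; 753]; [:: 40; 306; 361; 753]; [:: 118; 350; 478; 753]; [:: 5; 173; 452; 753];
  [:: 10; 115; 233; 756]; [:: 81; 201; 328; 756]; [:: 190; 219; 436; 756]; [:: 241; 299; 385; 756];
  [:: 318; 432; 532; 756]; [:: 65; 404; 479; 756]; [:: 113; 354; 501; 756]; [:: 3; 143; 530; 756];
  [:: 63; 81; 308; 759]; [:: 136; 138; 513; 759]; [:: 188; 295; 455; 759]; [:: 258; 330; 535; 759];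
  [:: 365; 466; 533; 759]; [:: 37; 235; 477; 759]; [:: 104; 275; 403; 759]; [:: 59; 178; 396; 759];
  [:: 0; 141; 375; 762]; [:: 98; 167; 262; 762]; [:: 254; 373; 481; 762]; [:: 90; 302; 404; 762];
  [:: 79; 473; 501; 762]; [:: 53; 297; 447; 762]; [:: 187; 343; 536; 762]; [:: 61; 234; 538; 762];
  [:: 66; 119; 335; 765]; [:: 84; 192; 539; 765]; [:: 163; 334; 394; 765]; [:: 258; 315; 486; 765];
  [:: 360; 425; 505; 765]; [:: 40; 274; 368; 765]; [:: 124; 251; 456; 765]; [:: 35; 194; 466; 765];
  [:: 38; 115; 262; 768]; [:: 108; 153; 360; 768]; [:: 145; 209; 470; 768]; [:: 225; 300; 374; 768];
  [:: 367; 462; 522; 768]; [:: 18; 298; 418; 768]; [:: 116; 287; 509; 768]; [:: 10; 191; 526; 768];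
  [:: 33; 134; 333; 771]; [:: 96; 261; 404; 771]; [:: 184; 214; 325; 771]; [:: 296; 375; 541; 771];
  [:: 195; 394; 444; 771]; [:: 49; 179; 512; 771]; [:: 97; 469; 537; 771]; [:: 53; 254; 449; 771];
  [:: 67; 200; 405; 774]; [:: 70; 171; 226; 774]; [:: 240; 299; 358; 774]; [:: 131; 356; 447; 774];
  [:: 123; 286; 501; 774]; [:: 42; 324; 457; 774]; [:: 151; 449; 497; 774]; [:: 5; 242; 517; 774];
  [:: 44; 73; 332; 777]; [:: 131; 141; 241; 777]; [:: 267; 304; 541; 777]; [:: 190; 282; 387; 777];
  [:: 167; 431; 501; 777]; [:: 12; 392; 497; 777]; [:: 75; 349; 423; 777]; [:: 67; 275; 430; 777];
  [:: 10; 121; 341; 780]; [:: 93; 142; 244; 780]; [:: 227; 315; 514; 780]; [:: 203; 304; 447; 780];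
  [:: 162; 360; 510; 780]; [:: 9; 443; 527; 780]; [:: 134; 361; 478; 780]; [:: 41; 225; 395; 780];
  [:: 67; 104; 337; 783]; [:: 124; 253; 547; 783]; [:: 197; 239; 287; 783]; [:: 300; 347; 536; 783];
  [:: 190; 482; 531; 783]; [:: 23; 138; 391; 783]; [:: 84; 372; 445; 783]; [:: 21; 267; 477; 783];
  [:: 68; 129; 363; 786]; [:: 92; 177; 507; 786]; [:: 139; 212; 388; 786]; [:: 320; 365; 527; 786];
  [:: 270; 447; 532; 786]; [:: 6; 262; 312; 786]; [:: 118; 310; 433; 786]; [:: 4; 194; 470; 786];
  [:: 167; 254; 383; 450]; [:: 172; 354; 453; 483]; [:: 152; 230; 415; 545]; [:: 23; 95; 217; 279];
  [:: 49; 75; 313; 509]; [:: 47; 122; 330; 372]].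

End BaseBlocks.

Lemma gdd_check_222 : gdd_check base_blocks_222 (8 * 69 + 222).
Proof. vm_cast_no_check (erefl true). Qed.

Lemma gdd_check_225 : gdd_check base_blocks_225 (8 * 69 + 225).
Proof. vm_cast_no_check (erefl true). Qed.

Lemma gdd_check_228 : gdd_check base_blocks_228 (8 * 69 + 228).
Proof. vm_cast_no_check (erefl true). Qed.

Lemma gdd_check_231 : gdd_check base_blocks_231 (8 * 69 + 231).
Proof. vm_cast_no_check (erefl true). Qed.

Lemma gdd_check_234 : gdd_check base_blocks_234 (8 * 69 + 234).
Proof. vm_cast_no_check (erefl true). Qed.

Lemma gdd_check_237 : gdd_check base_blocks_237 (8 * 69 + 237).
Proof. vm_cast_no_check (erefl true). Qed.

Theorem lemma2p5 :
  forall g : nat, g \in [:: 222; 225; 228; 231; 234; 237] ->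
    exists G B : {set {set 'I_(8 * 69 + g)}},
      is_4GDD G B [:: (69, 8); (g, 1)].
Proof.
move=> g; rewrite !inE.
case/predU1P => [-> | ]; first exact: gdd_check_sound gdd_check_222 isT.
case/predU1P => [-> | ]; first exact: gdd_check_sound gdd_check_225 isT.
case/predU1P => [-> | ]; first exact: gdd_check_sound gdd_check_228 isT.
case/predU1P => [-> | ]; first exact: gdd_check_sound gdd_check_231 isT.
case/predU1P => [-> | ]; first exact: gdd_check_sound gdd_check_234 isT.
by move/eqP => ->; exact: gdd_check_sound gdd_check_237 isT.
Qed.
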